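(* Let $\theta\in(0,2\pi)$. Then for all $x,y\in S_\theta$: (1) $j^*_{S_\theta}(x,y)\le p_{S_\theta}(x,y)\le\sqrt2\, j^*_{S_\theta}(x,y)$ for every $\theta\in(0,2\pi)$; (2) $j^*_{S_\theta}(x,y)\le s_{S_\theta}(x,y)\le\sqrt2\, j^*_{S_\theta}(x,y)$ if $\theta\in(0,\pi]$; (3) $j^*_{S_\theta}(x,y)\le s_{S_\theta}(x,y)\le 2\sin(\theta/4)\, j^*_{S_\theta}(x,y)$ if $\theta\in(\pi,2\pi)$; (4) $(\sqrt2\cos(\theta/4))^{-1}p_{S_\theta}(x,y)\le s_{S_\theta}(x,y)\le p_{S_\theta}(x,y)$ if $\theta\in(0,\pi]$; (5) $p_{S_\theta}(x,y)\le s_{S_\theta}(x,y)\le \sqrt2\sin(\theta/4)\, p_{S_\theta}(x,y)$ if $\theta\in(\pi,2\pi)$. Furthermore, the constants are sharp (best possible) in each case.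
   Context: For $\theta\in(0,2\pi)$, $S_\theta=\{x\in\mathbb{C}:0<\arg(x)<\theta\}$. For a domain $G\subsetneq\mathbb{C}$ and $x\in G$, $d_G(x)=\inf\{|x-z|: z\in\partial G\}$. Define $s_G(x,y)=\frac{|x-y|}{\inf_{z\in\partial G}(|x-z|+|z-y|)}$ (triangular ratio metric), $j^*_G(x,y)=\frac{|x-y|}{|x-y|+2\min\{d_G(x),d_G(y)\}}$, and $p_G(x,y)=\frac{|x-y|}{\sqrt{|x-y|^2+4d_G(x)d_G(y)}}$ (point pair function). *)

From Stdlib Require Import Reals.
From Coquelicot Require Import Coquelicot.
Open Scope R_scope.

Definition sector (theta : R) (x : C) : Prop :=
  exists r phi : R, 0 < r /\ 0 < phi < theta /\
    x = (r * cos phi, r * sin phi).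

Definition boundary (G : C -> Prop) (z : C) : Prop :=
  forall eps : R, 0 < eps ->
    (exists w, G w /\ Cmod (Cminus w z) < eps) /\
    (exists w, ~ G w /\ Cmod (Cminus w z) < eps).

Definition dG (G : C -> Prop) (x : C) : R :=
  real (Glb_Rbar (fun t => exists z, boundary G z /\ t = Cmod (Cminus x z))).

Definition sG (G : C -> Prop) (x y : C) : R :=
  Cmod (Cminus x y) /
  real (Glb_Rbar (fun t => exists z, boundary G z /\
                    t = Cmod (Cminus x z) + Cmod (Cminus z y))).

Definition jstar (G : C -> Prop) (x y : C) : R :=
  Cmod (Cminus x y) / (Cmod (Cminus x y) + 2 * Rmin (dG G x) (dG G y)).

Definition pG (G : C -> Prop) (x y : C) : R :=
  Cmod (Cminus x y) /
  sqrt (Cmod (Cminus x y) ^ 2 + 4 * dG G x * dG G y).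

Definition sharp_lower (G : C -> Prop) (L : R) (A B : C -> C -> R) : Prop :=
  forall c, L < c -> exists x y, G x /\ G y /\ B x y < c * A x y.
Definition sharp_upper (G : C -> Prop) (U : R) (A B : C -> C -> R) : Prop :=
  forall c, c < U -> exists x y, G x /\ G y /\ c * A x y < B x y.

(** For a domain G, j*, p and s are all of the form |x - y| / D with
    D = |x - y| + 2 min (d x) (d y), sqrt (|x - y|^2 + 4 d x d y) and
    inf_{z in boundary G} (|x - z| + |z - y|) respectively, so the theorem is a
    comparison of these three denominators on a sector.  The bounds between j* and
    p, and j* <= s, hold in every domain because d is 1-Lipschitz.

    For theta <= PI the sector is the intersection of the half-planes bounded by
    the lines of its sides, so d x is the smaller distance a x, b x to these lines,
    and reflecting y in a side line shows that the infimum defining s is the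
    smaller of sqrt (|x - y|^2 + 4 a x a y) and sqrt (|x - y|^2 + 4 b x b y).
    Comparing with sqrt (|x - y|^2 + 4 d x d y) gives s <= p, and the mixed case
    a x <= b x, b y <= a y gives p <= sqrt 2 cos (theta / 4) s.

    For theta > PI the complement K of the sector is a convex cone.  For z in K,
    d x <= n . (x - z) for some unit normal n in the polar cone of K, and two such
    normals make an angle at most theta - PI; this gives
    |x - y|^2 + 4 d x d y <= 2 sin (theta / 4)^2 (|x - z| + |z - y|)^2, i.e.
    s <= sqrt 2 sin (theta / 4) p.  Conversely p <= s because a path of length at
    most sqrt (|x - y|^2 + 4 d x d y) through K always exists: through the point
    where [x, y] meets the bisector of the angle xOy, through the origin, or
    through a side, according to the direction of that bisector.  The remaining
    bounds for j* follow by composing with j* <= p <= sqrt 2 j*.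

    The constants are approached by far-apart points on the bisector of the
    sector and attained at the pair e^(i theta/4), e^(3 i theta/4) and, for
    theta <= PI, at a horizontal pair near the real axis. *)

From Stdlib Require Import Reals Lra Psatz Classical.
From Coquelicot Require Import Coquelicot.
Open Scope R_scope.
Set Bullet Behavior "Strict Subproofs".

(** * Distances and segments *)

Definition cdist (x y : C) : R := Cmod (Cminus x y).

Lemma cdist_sqrt x y : cdist x y = sqrt ((fst x - fst y) ^ 2 + (snd x - snd y) ^ 2).
Proof.
  destruct x as [x1 x2], y as [y1 y2].
  unfold cdist, Cmod, Cminus, Cplus, Copp; simpl. f_equal; ring.
Qed.

Lemma cdist_pow2 x y : cdist x y ^ 2 = (fst x - fst y) ^ 2 + (snd x - snd y) ^ 2.
Proof. rewrite cdist_sqrt. apply pow2_sqrt. apply Rplus_le_le_0_compat; apply pow2_ge_0. Qed.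

Lemma cdist_ge0 x y : 0 <= cdist x y.
Proof. apply Cmod_ge_0. Qed.

Lemma cdist_sym x y : cdist x y = cdist y x.
Proof. rewrite !cdist_sqrt. f_equal. ring. Qed.

Lemma cdist_triangle x y z : cdist x z <= cdist x y + cdist y z.
Proof.
  unfold cdist. replace (Cminus x z) with (Cplus (Cminus x y) (Cminus y z)).
  - apply Cmod_triangle.
  - destruct x, y, z. unfold Cminus, Cplus, Copp; simpl. f_equal; ring.
Qed.

Lemma cdist_le_pow2 a b c d : cdist a b ^ 2 <= cdist c d ^ 2 -> cdist a b <= cdist c d.
Proof. intros H. pose proof (cdist_ge0 a b). pose proof (cdist_ge0 c d). nra. Qed.

Lemma cdist_0_r x : cdist x (0, 0) = Cmod x.
Proof. rewrite cdist_sqrt. unfold Cmod. f_equal. simpl. ring. Qed.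

Lemma cdist_0_l x : cdist (0, 0) x = Cmod x.
Proof. rewrite cdist_sym. apply cdist_0_r. Qed.

Lemma Cmod_mult_self v : Cmod v * Cmod v = fst v ^ 2 + snd v ^ 2.
Proof. unfold Cmod. apply sqrt_sqrt. nra. Qed.

Lemma le_sqrt_of_pow2_le a c : 0 <= c -> c ^ 2 <= a -> c <= sqrt a.
Proof. intros Hc H. rewrite <- (sqrt_pow2 c Hc). apply sqrt_le_1_alt. exact H. Qed.

Lemma sqrt_le_of_le_pow2 a c : 0 <= c -> a <= c ^ 2 -> sqrt a <= c.
Proof. intros Hc H. rewrite <- (sqrt_pow2 c Hc). apply sqrt_le_1_alt. exact H. Qed.

Lemma sqrt_eq_of_pow2 a c : 0 <= c -> a = c ^ 2 -> sqrt a = c.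
Proof. intros Hc ->. apply sqrt_pow2. exact Hc. Qed.

Lemma ratio_le_scaled t a b k : 0 <= t -> 0 < a -> 0 < b -> b <= k * a -> t / a <= k * (t / b).
Proof.
  intros Ht Ha Hb H. unfold Rdiv.
  assert (k * / b - / a = (k * a - b) / (a * b)) by (field; lra).
  assert (0 <= (k * a - b) / (a * b)) by (apply Rdiv_le_0_compat; nra).
  nra.
Qed.

Lemma scaled_ratio_le t a b k : 0 <= t -> 0 < a -> 0 < b -> k * b <= a -> k * (t / a) <= t / b.
Proof.
  intros Ht Ha Hb H. unfold Rdiv.
  assert (/ b - k * / a = (a - k * b) / (a * b)) by (field; lra).
  assert (0 <= (a - k * b) / (a * b)) by (apply Rdiv_le_0_compat; nra).
  nra.
Qed.

Lemma sqrt2_pos : 0 < sqrt 2.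
Proof. apply sqrt_lt_R0. lra. Qed.

Lemma sqrt2_mult_self : sqrt 2 * sqrt 2 = 2.
Proof. apply sqrt_sqrt. lra. Qed.

Lemma inv_sqrt2 : / sqrt 2 = sqrt 2 / 2.
Proof.
  pose proof sqrt2_mult_self. pose proof sqrt2_pos.
  apply Rmult_eq_reg_l with (sqrt 2); [|lra].
  rewrite Rinv_r by lra. unfold Rdiv. rewrite <- Rmult_assoc, H. field.
Qed.

Lemma jstar_pG_ratio_bounds t a b : 0 <= t -> 0 < a -> 0 < b -> b <= a + t -> a <= b + t ->
  t / (t + 2 * Rmin a b) <= t / sqrt (t ^ 2 + 4 * a * b) /\
  t / sqrt (t ^ 2 + 4 * a * b) <= sqrt 2 * (t / (t + 2 * Rmin a b)).
Proof.
  intros Ht Ha Hb H1 H2.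
  assert (Hm : 0 < Rmin a b) by (apply Rmin_pos; auto).
  assert (Hab : Rmin a b = a \/ Rmin a b = b) by (unfold Rmin; destruct (Rle_dec a b); auto).
  pose proof (Rmin_l a b). pose proof (Rmin_r a b).
  assert (Hs : 0 < sqrt (t ^ 2 + 4 * a * b)) by (apply sqrt_lt_R0; nra).
  split.
  - rewrite <- (Rmult_1_l (t / sqrt _)). apply ratio_le_scaled; try lra.
    rewrite Rmult_1_l. apply sqrt_le_of_le_pow2; [lra|].
    destruct Hab as [-> | ->]; nra.
  - apply ratio_le_scaled; try lra.
    rewrite <- sqrt_mult by nra. apply le_sqrt_of_pow2_le; [lra|].
    assert (Rmin a b * Rmin a b <= a * b) by nra.
    pose proof (pow2_ge_0 (t - 2 * Rmin a b)). nra.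
Qed.

Lemma cauchy_schwarz2 a b d1 d2 : (a * d1 + b * d2) ^ 2 <= (a ^ 2 + b ^ 2) * (d1 ^ 2 + d2 ^ 2).
Proof.
  replace ((a ^ 2 + b ^ 2) * (d1 ^ 2 + d2 ^ 2)) with ((a * d1 + b * d2) ^ 2 + (a * d2 - b * d1) ^ 2) by ring.
  pose proof (pow2_ge_0 (a * d2 - b * d1)). lra.
Qed.

Lemma dot_le_Cmod q d1 d2 : fst q * d1 + snd q * d2 <= Cmod q * sqrt (d1 ^ 2 + d2 ^ 2).
Proof.
  rewrite <- (sqrt_pow2 (Cmod q)) by apply Cmod_ge_0.
  rewrite <- sqrt_mult by (nra || apply pow2_ge_0).
  destruct (Rle_lt_dec (fst q * d1 + snd q * d2) 0).
  - pose proof (sqrt_pos (Cmod q ^ 2 * (d1 ^ 2 + d2 ^ 2))). lra.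
  - apply le_sqrt_of_pow2_le; [lra|]. rewrite Cmod2_alt. apply cauchy_schwarz2.
Qed.

Definition seg (x w : C) (u : R) : C :=
  (fst x + u * (fst w - fst x), snd x + u * (snd w - snd x)).

Lemma cdist_seg x w a b : cdist (seg x w a) (seg x w b) = Rabs (a - b) * cdist x w.
Proof.
  rewrite !cdist_sqrt. unfold seg; simpl.
  rewrite <- sqrt_Rsqr_abs, <- sqrt_mult
    by (apply Rle_0_sqr || (apply Rplus_le_le_0_compat; apply pow2_ge_0)).
  f_equal. unfold Rsqr. ring.
Qed.

Lemma seg_0 x w : seg x w 0 = x.
Proof. destruct x; unfold seg; simpl; f_equal; ring. Qed.

Lemma seg_1 x w : seg x w 1 = w.
Proof. destruct x, w; unfold seg; simpl; f_equal; ring. Qed.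

Lemma cdist_seg_split a b l : 0 <= l <= 1 -> cdist a (seg a b l) + cdist (seg a b l) b = cdist a b.
Proof.
  intros Hl.
  replace (cdist a (seg a b l)) with (cdist (seg a b 0) (seg a b l)) by (rewrite seg_0; auto).
  replace (cdist (seg a b l) b) with (cdist (seg a b l) (seg a b 1)) by (rewrite seg_1; auto).
  replace (cdist a b) with (cdist (seg a b 0) (seg a b 1)) by (rewrite seg_0, seg_1; auto).
  rewrite !cdist_seg, (Rabs_left1 (0 - l)), (Rabs_left1 (l - 1)), (Rabs_left1 (0 - 1)) by lra.
  ring.
Qed.

Lemma cdist_seg_lt x w a b eps : 0 < eps ->
  Rabs (a - b) <= eps / (cdist x w + 1) / 2 -> cdist (seg x w a) (seg x w b) < eps.
Proof.
  intros Heps Hab. rewrite cdist_seg. pose proof (cdist_ge0 x w) as HL.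
  assert (E : eps / (cdist x w + 1) / 2 * (cdist x w + 1) = eps / 2) by (field; lra).
  pose proof (Rabs_pos (a - b)). nra.
Qed.

(** * Boundary, distance to the boundary and the denominator of [sG] *)

Section BoundaryOnSegment.

Variables (G : C -> Prop) (x w : C).
Hypotheses (Gx : G x) (Gw : ~ G w).

Lemma segment_exit_parameter : exists m, 0 <= m <= 1 /\
  (forall v, 0 <= v < m -> G (seg x w v)) /\
  (forall u, 0 <= u <= 1 -> (forall v, 0 <= v <= u -> G (seg x w v)) -> u <= m).
Proof.
  set (E := fun u => 0 <= u <= 1 /\ forall v, 0 <= v <= u -> G (seg x w v)).
  assert (E0 : E 0).
  { split; [lra|]. intros v Hv. replace v with 0 by lra. rewrite seg_0. exact Gx. }
  destruct (completeness E) as [m [Hub Hlub]].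
  - exists 1. intros u [Hu _]. lra.
  - exists 0. exact E0.
  - exists m. split; [split; [apply Hub, E0 | apply Hlub; intros u [Hu _]; lra]|].
    split; [|intros u Hu HG; apply Hub; split; assumption].
    intros v Hv. apply NNPP. intros HvG.
    assert (m <= v); [|lra].
    apply Hlub. intros u [Hu HG]. destruct (Rle_dec u v) as [|Hvu]; [assumption|].
    exfalso. apply HvG, HG. lra.
Qed.

Variable m : R.
Hypotheses (Hm : 0 <= m <= 1) (Hin : forall v, 0 <= v < m -> G (seg x w v))
  (Hmax : forall u, 0 <= u <= 1 -> (forall v, 0 <= v <= u -> G (seg x w v)) -> u <= m).

Let delta eps := eps / (cdist x w + 1) / 2.

Let delta_pos eps : 0 < eps -> 0 < delta eps.
Proof.
  intros Heps. pose proof (cdist_ge0 x w).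
  unfold delta. apply Rdiv_lt_0_compat; [apply Rdiv_lt_0_compat|]; lra.
Qed.

Lemma exit_point_inside_near eps : 0 < eps ->
  exists w', G w' /\ Cmod (Cminus w' (seg x w m)) < eps.
Proof.
  intros Heps. pose proof (delta_pos eps Heps).
  set (v := Rmax 0 (m - delta eps)).
  exists (seg x w v). split.
  - unfold v, Rmax. destruct (Rle_dec 0 (m - delta eps)); [apply Hin; lra|].
    rewrite seg_0. exact Gx.
  - apply cdist_seg_lt; [exact Heps|]. fold (delta eps).
    unfold v, Rmax. destruct (Rle_dec 0 (m - delta eps)); rewrite Rabs_left1; lra.
Qed.

Lemma exit_point_outside_near eps : 0 < eps ->
  exists w', ~ G w' /\ Cmod (Cminus w' (seg x w m)) < eps.
Proof.
  intros Heps. apply NNPP. intros Hno. pose proof (delta_pos eps Heps).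
  assert (Hnear : forall v, Rabs (v - m) <= delta eps -> G (seg x w v)).
  { intros v Hv. apply NNPP. intros HvG. apply Hno. exists (seg x w v).
    split; [exact HvG | apply cdist_seg_lt; assumption]. }
  assert (Hext : Rmin 1 (m + delta eps) <= m).
  { apply Hmax; [split; [apply Rmin_glb; lra | apply Rmin_l]|].
    intros v Hv. destruct (Rlt_le_dec v m); [apply Hin; lra|].
    apply Hnear. pose proof (Rmin_r 1 (m + delta eps)). rewrite Rabs_right; lra. }
  assert (m = 1) by (unfold Rmin in Hext; destruct (Rle_dec 1 (m + delta eps)); lra).
  apply Gw. rewrite <- (seg_1 x w). apply Hnear. rewrite Rabs_right; lra.
Qed.

End BoundaryOnSegment.

Lemma boundary_on_segment (G : C -> Prop) x w : G x -> ~ G w ->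
  exists z, boundary G z /\ cdist x z + cdist z w = cdist x w.
Proof.
  intros Gx Gw. destruct (segment_exit_parameter G x w Gx) as (m & Hm & Hin & Hmax).
  exists (seg x w m). split; [|apply cdist_seg_split, Hm].
  intros eps Heps. split.
  - apply exit_point_inside_near; assumption.
  - apply exit_point_outside_near; assumption.
Qed.

Lemma real_Glb_Rbar_image (P : C -> Prop) (f : C -> R) :
  (exists z, P z) -> (forall z, P z -> 0 <= f z) ->
  let m := real (Glb_Rbar (fun t => exists z, P z /\ t = f z)) in
  0 <= m /\ (forall z, P z -> m <= f z) /\
  (forall L, (forall z, P z -> L <= f z) -> L <= m).
Proof.
  intros [z0 Hz0] Hpos m.
  set (E := fun t => exists z, P z /\ t = f z) in m.
  destruct (Glb_Rbar_correct E) as [Hlb Hglb].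
  assert (Hlow : forall L : R, (forall z, P z -> L <= f z) -> Rbar_le L (Glb_Rbar E)).
  { intros L HL. apply Hglb. intros t [z [Hz ->]]. apply HL, Hz. }
  assert (Hup : forall z, P z -> Rbar_le (Glb_Rbar E) (f z)).
  { intros z Hz. apply Hlb. exists z. auto. }
  unfold m. destruct (Glb_Rbar E) as [r| |].
  - split; [|split]; [apply (Hlow 0 Hpos) | exact Hup | exact Hlow].
  - destruct (Hup z0 Hz0).
  - destruct (Hlow 0 Hpos).
Qed.

Definition sG_den (G : C -> Prop) (x y : C) : R :=
  real (Glb_Rbar (fun t => exists z, boundary G z /\
                    t = Cmod (Cminus x z) + Cmod (Cminus z y))).

Lemma sG_eq G x y : sG G x y = cdist x y / sG_den G x y.
Proof. reflexivity. Qed.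

Section DomainWithBoundary.

Variable G : C -> Prop.
Hypothesis boundary_ex : exists z, boundary G z.

Lemma dG_spec x : 0 <= dG G x /\ (forall z, boundary G z -> dG G x <= cdist x z) /\
  (forall L, (forall z, boundary G z -> L <= cdist x z) -> L <= dG G x).
Proof.
  apply (real_Glb_Rbar_image (boundary G) (fun z => cdist x z) boundary_ex).
  intros; apply cdist_ge0.
Qed.

Lemma sG_den_spec x y : 0 <= sG_den G x y /\
  (forall z, boundary G z -> sG_den G x y <= cdist x z + cdist z y) /\
  (forall L, (forall z, boundary G z -> L <= cdist x z + cdist z y) -> L <= sG_den G x y).
Proof.
  apply (real_Glb_Rbar_image (boundary G) (fun z => cdist x z + cdist z y) boundary_ex).
  intros z _. pose proof (cdist_ge0 x z). pose proof (cdist_ge0 z y). lra.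
Qed.

Lemma dG_glb x L : (forall z, boundary G z -> L <= cdist x z) -> L <= dG G x.
Proof. apply dG_spec. Qed.

Lemma sG_den_glb x y L :
  (forall z, boundary G z -> L <= cdist x z + cdist z y) -> L <= sG_den G x y.
Proof. apply sG_den_spec. Qed.

Lemma dG_lipschitz x y : dG G x <= cdist x y + dG G y.
Proof.
  enough (dG G x - cdist x y <= dG G y) by lra.
  apply dG_glb. intros z Hz. pose proof (proj1 (proj2 (dG_spec x)) z Hz).
  pose proof (cdist_triangle x y z). lra.
Qed.

Lemma sG_den_ge_cdist x y : cdist x y <= sG_den G x y.
Proof. apply sG_den_glb. intros z _. apply cdist_triangle. Qed.

Lemma sG_den_ge_dG_sum x y : dG G x + dG G y <= sG_den G x y.
Proof.
  apply sG_den_glb. intros z Hz.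
  pose proof (proj1 (proj2 (dG_spec x)) z Hz). pose proof (proj1 (proj2 (dG_spec y)) z Hz).
  rewrite (cdist_sym z y). lra.
Qed.

Lemma sG_den_le_cdist_dG x y :
  sG_den G x y <= cdist x y + 2 * dG G x /\ sG_den G x y <= cdist x y + 2 * dG G y.
Proof.
  split; [enough ((sG_den G x y - cdist x y) / 2 <= dG G x) by lra
         |enough ((sG_den G x y - cdist x y) / 2 <= dG G y) by lra];
    apply dG_glb; intros z Hz; pose proof (proj1 (proj2 (sG_den_spec x y)) z Hz).
  - pose proof (cdist_triangle z x y). rewrite (cdist_sym z x) in *. lra.
  - pose proof (cdist_triangle x y z). rewrite (cdist_sym z y) in *. lra.
Qed.

Variables x y : C.
Hypotheses (dGx_pos : 0 < dG G x) (dGy_pos : 0 < dG G y).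

Let sG_den_pos : 0 < sG_den G x y.
Proof. pose proof (sG_den_ge_dG_sum x y). lra. Qed.

Let pG_den_pos : 0 < sqrt (cdist x y ^ 2 + 4 * dG G x * dG G y).
Proof. apply sqrt_lt_R0. pose proof (pow2_ge_0 (cdist x y)). nra. Qed.

Lemma jstar_le_pG_le_sqrt2_jstar :
  jstar G x y <= pG G x y /\ pG G x y <= sqrt 2 * jstar G x y.
Proof.
  unfold jstar, pG. fold (cdist x y).
  apply jstar_pG_ratio_bounds; auto using cdist_ge0.
  - pose proof (dG_lipschitz y x). rewrite cdist_sym in H. lra.
  - pose proof (dG_lipschitz x y). lra.
Qed.

Lemma jstar_le_sG : jstar G x y <= sG G x y.
Proof.
  unfold jstar. rewrite sG_eq. fold (cdist x y).
  rewrite <- (Rmult_1_l (cdist x y / sG_den G x y)).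
  pose proof (Rmin_pos _ _ dGx_pos dGy_pos). pose proof (cdist_ge0 x y).
  apply ratio_le_scaled; try lra.
  destruct (sG_den_le_cdist_dG x y). unfold Rmin. destruct (Rle_dec (dG G x) (dG G y)); lra.
Qed.

Lemma sG_le_1 : sG G x y <= 1.
Proof.
  rewrite sG_eq. pose proof (sG_den_ge_cdist x y).
  apply Rmult_le_reg_r with (sG_den G x y); [lra|].
  unfold Rdiv. rewrite Rmult_assoc, Rinv_l; lra.
Qed.

Lemma sG_le_pG_scaled c : 0 < c ->
  sqrt (cdist x y ^ 2 + 4 * dG G x * dG G y) <= c * sG_den G x y -> sG G x y <= c * pG G x y.
Proof.
  intros Hc H. rewrite sG_eq. unfold pG. fold (cdist x y).
  apply ratio_le_scaled; auto using cdist_ge0.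
Qed.

Lemma pG_le_sG_scaled c : 0 < c ->
  sG_den G x y <= c * sqrt (cdist x y ^ 2 + 4 * dG G x * dG G y) -> pG G x y <= c * sG G x y.
Proof.
  intros Hc H. rewrite sG_eq. unfold pG. fold (cdist x y).
  apply ratio_le_scaled; auto using cdist_ge0.
Qed.

End DomainWithBoundary.

Lemma pG_le_1 G x y : 0 < dG G x -> 0 < dG G y -> pG G x y <= 1.
Proof.
  intros Hx Hy. unfold pG. fold (cdist x y). pose proof (cdist_ge0 x y).
  assert (Hs : cdist x y <= sqrt (cdist x y ^ 2 + 4 * dG G x * dG G y))
    by (apply le_sqrt_of_pow2_le; nra).
  assert (0 < sqrt (cdist x y ^ 2 + 4 * dG G x * dG G y)) by (apply sqrt_lt_R0; nra).
  apply Rmult_le_reg_r with (sqrt (cdist x y ^ 2 + 4 * dG G x * dG G y)); auto.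
  unfold Rdiv. rewrite Rmult_assoc, Rinv_l; lra.
Qed.

Lemma boundary_ex_of_compl (G : C -> Prop) x w : G x -> ~ G w -> exists z, boundary G z.
Proof. intros Gx Gw. destruct (boundary_on_segment G x w Gx Gw) as [z [Hz _]]. eauto. Qed.

Lemma dG_le_compl (G : C -> Prop) x w : G x -> ~ G w -> dG G x <= cdist x w.
Proof.
  intros Gx Gw. destruct (boundary_on_segment G x w Gx Gw) as [z [Hz Hd]].
  pose proof (proj1 (proj2 (dG_spec G (ex_intro _ z Hz) x)) z Hz).
  pose proof (cdist_ge0 z w). lra.
Qed.

Lemma sG_den_le_compl (G : C -> Prop) x y w : G x -> ~ G w ->
  sG_den G x y <= cdist x w + cdist w y.
Proof.
  intros Gx Gw. destruct (boundary_on_segment G x w Gx Gw) as [z [Hz Hd]].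
  pose proof (proj1 (proj2 (sG_den_spec G (ex_intro _ z Hz) x y)) z Hz).
  pose proof (cdist_triangle z w y). lra.
Qed.

(** * Half-planes *)

Section HalfPlane.

Variables n1 n2 : R.
Hypothesis unit_normal : n1 ^ 2 + n2 ^ 2 = 1.

Definition lin (v : C) : R := n1 * fst v + n2 * snd v.

Lemma lin_lipschitz w z : Rabs (lin w - lin z) <= cdist w z.
Proof.
  rewrite cdist_sqrt, <- sqrt_Rsqr_abs. apply sqrt_le_1_alt. unfold lin, Rsqr.
  set (a := fst w - fst z). set (b := snd w - snd z).
  replace (n1 * fst w + n2 * snd w - (n1 * fst z + n2 * snd z)) with (n1 * a + n2 * b) by (unfold a, b; ring).
  assert (E : a ^ 2 + b ^ 2 - ((n1 * a + n2 * b) ^ 2 + (n1 * b - n2 * a) ^ 2)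
              = (a ^ 2 + b ^ 2) * (1 - (n1 ^ 2 + n2 ^ 2))) by ring.
  rewrite unit_normal in E. pose proof (pow2_ge_0 (n1 * b - n2 * a)). nra.
Qed.

Lemma lin_le_cdist x z : lin z <= 0 -> lin x <= cdist x z.
Proof. intros Hz. pose proof (lin_lipschitz x z). pose proof (Rle_abs (lin x - lin z)). lra. Qed.

Lemma lin_seg a b l : lin (seg a b l) = lin a + l * (lin b - lin a).
Proof. unfold lin, seg; simpl. ring. Qed.

Definition reflect (y : C) : C := (fst y - 2 * lin y * n1, snd y - 2 * lin y * n2).

Lemma lin_reflect y : lin (reflect y) = - lin y.
Proof.
  unfold reflect, lin; simpl.
  transitivity ((n1 * fst y + n2 * snd y) * (1 - 2 * (n1 ^ 2 + n2 ^ 2))); [ring|].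
  rewrite unit_normal. ring.
Qed.

Lemma cdist_reflect_pow2 x y : cdist x (reflect y) ^ 2 = cdist x y ^ 2 + 4 * lin x * lin y.
Proof.
  rewrite !cdist_pow2. unfold reflect, lin; simpl.
  transitivity ((fst x - fst y) ^ 2 + (snd x - snd y) ^ 2
     + 4 * (n1 * fst x + n2 * snd x) * (n1 * fst y + n2 * snd y)
     - 4 * (n1 * fst y + n2 * snd y) ^ 2 * (1 - (n1 ^ 2 + n2 ^ 2))); [ring|].
  rewrite unit_normal. ring.
Qed.

Lemma cdist_reflect x y : sqrt (cdist x y ^ 2 + 4 * lin x * lin y) = cdist x (reflect y).
Proof. rewrite <- cdist_reflect_pow2. apply sqrt_pow2, cdist_ge0. Qed.

(* A path from x to y through the closed half-plane [lin <= 0] is at least as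
   long as the segment from x to the mirror image of y. *)
Lemma halfplane_path_ge x y z : lin z <= 0 -> 0 <= lin x -> 0 <= lin y ->
  sqrt (cdist x y ^ 2 + 4 * lin x * lin y) <= cdist x z + cdist z y.
Proof.
  intros Hz Hx Hy. rewrite cdist_reflect.
  pose proof (cdist_triangle x z (reflect y)).
  assert (cdist z (reflect y) <= cdist z y).
  { apply cdist_le_pow2. rewrite cdist_reflect_pow2. nra. }
  lra.
Qed.

Definition crossing (x y : C) : C := seg (reflect y) x (lin y / (lin x + lin y)).

Lemma lin_crossing x y : 0 < lin x + lin y -> lin (crossing x y) = 0.
Proof. intros Hs. unfold crossing. rewrite lin_seg, lin_reflect. field. lra. Qed.

Lemma crossing_path_eq x y : 0 <= lin x -> 0 <= lin y -> 0 < lin x + lin y ->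
  cdist x (crossing x y) + cdist (crossing x y) y = sqrt (cdist x y ^ 2 + 4 * lin x * lin y).
Proof.
  intros Hx Hy Hs. rewrite cdist_reflect.
  assert (E : cdist (crossing x y) y = cdist (crossing x y) (reflect y)).
  { pose proof (cdist_reflect_pow2 (crossing x y) y) as K. rewrite lin_crossing in K by lra.
    pose proof (cdist_ge0 (crossing x y) y). pose proof (cdist_ge0 (crossing x y) (reflect y)).
    nra. }
  rewrite E. unfold crossing.
  set (l := lin y / (lin x + lin y)).
  assert (Hl : 0 <= l <= 1).
  { unfold l. split; [apply Rdiv_le_0_compat; lra|].
    apply Rmult_le_reg_r with (lin x + lin y); auto.
    unfold Rdiv. rewrite Rmult_assoc, Rinv_l; lra. }
  pose proof (cdist_seg_split (reflect y) x l Hl).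
  rewrite (cdist_sym x), (cdist_sym x (reflect y)), (cdist_sym (seg _ _ _) (reflect y)). lra.
Qed.

Definition foot (x : C) : C := (fst x - lin x * n1, snd x - lin x * n2).

Lemma lin_foot x : lin (foot x) = 0.
Proof.
  unfold foot, lin; simpl.
  transitivity ((n1 * fst x + n2 * snd x) * (1 - (n1 ^ 2 + n2 ^ 2))); [ring|].
  rewrite unit_normal. ring.
Qed.

Lemma cdist_foot x : cdist x (foot x) = Rabs (lin x).
Proof.
  rewrite cdist_sqrt, <- sqrt_Rsqr_abs. f_equal. unfold foot, Rsqr; simpl.
  transitivity (lin x * lin x * (n1 ^ 2 + n2 ^ 2)); [ring|]. rewrite unit_normal. ring.
Qed.

End HalfPlane.

(** * Sectors *)

(* [side0] and [side1 th] are the signed distances to the lines carrying the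
   sides arg = 0 and arg = th, positive on the side of the sector; [along1 th] is
   the coordinate along the side arg = th. *)
Definition side0 (z : C) : R := snd z.
Definition side1 (th : R) (z : C) : R := fst z * sin th - snd z * cos th.
Definition along1 (th : R) (v : C) : R := fst v * cos th + snd v * sin th.

Lemma sin_cos_pow2 th : sin th ^ 2 + cos th ^ 2 = 1.
Proof. pose proof (sin2_cos2 th). unfold Rsqr in H. nra. Qed.

Lemma unit_side0 : 0 ^ 2 + 1 ^ 2 = 1.
Proof. ring. Qed.

Lemma unit_side1 th : sin th ^ 2 + (- cos th) ^ 2 = 1.
Proof. pose proof (sin_cos_pow2 th). nra. Qed.

Lemma side0_lin z : side0 z = lin 0 1 z.
Proof. unfold side0, lin. ring. Qed.

Lemma side1_lin th z : side1 th z = lin (sin th) (- cos th) z.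
Proof. unfold side1, lin. ring. Qed.

Lemma side0_lipschitz w z : Rabs (side0 w - side0 z) <= cdist w z.
Proof. rewrite !side0_lin. apply lin_lipschitz, unit_side0. Qed.

Lemma side1_lipschitz th w z : Rabs (side1 th w - side1 th z) <= cdist w z.
Proof. rewrite !side1_lin. apply lin_lipschitz, unit_side1. Qed.

Lemma side1_polar th r phi : side1 th (r * cos phi, r * sin phi) = r * sin (th - phi).
Proof. unfold side1; simpl. rewrite sin_minus. ring. Qed.

Definition polar (r phi : R) : C := (r * cos phi, r * sin phi).

Lemma sector_polar th r phi : 0 < r -> 0 < phi < th -> sector th (polar r phi).
Proof. intros Hr Hphi. exists r, phi. auto. Qed.

Lemma Cmod_polar r phi : 0 <= r -> Cmod (polar r phi) = r.
Proof.
  intros Hr. unfold Cmod, polar; simpl. apply sqrt_eq_of_pow2; auto.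
  pose proof (sin_cos_pow2 phi). nra.
Qed.

Lemma cdist_polar_ray r s phi : cdist (polar r phi) (polar s phi) = Rabs (r - s).
Proof.
  rewrite cdist_sqrt, <- sqrt_Rsqr_abs. f_equal. unfold polar, Rsqr; simpl.
  pose proof (sin_cos_pow2 phi). transitivity ((r - s) ^ 2 * (sin phi ^ 2 + cos phi ^ 2)); [ring|].
  rewrite H. ring.
Qed.

Lemma along1_polar th r phi : along1 th (polar r phi) = r * cos (th - phi).
Proof. unfold along1, polar; simpl. rewrite cos_minus. ring. Qed.

Lemma sector_sides_pos th z : 0 < th < 2 * PI -> sector th z ->
  (th <= PI -> 0 < side0 z /\ 0 < side1 th z) /\ (PI < th -> 0 < side0 z \/ 0 < side1 th z).
Proof.
  intros Hth [r [phi [Hr [Hphi ->]]]]. rewrite side1_polar. unfold side0; simpl.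
  split.
  - intros Hle. split; apply Rmult_lt_0_compat; auto; apply sin_gt_0; lra.
  - intros Hgt. destruct (Rlt_le_dec phi PI); [left|right];
      apply Rmult_lt_0_compat; auto; apply sin_gt_0; lra.
Qed.

Lemma polar_upper z : 0 < snd z -> exists r a, 0 < r /\ 0 < a < PI /\ z = (r * cos a, r * sin a).
Proof.
  destruct z as [z1 z2]; simpl. intros H2.
  set (r := sqrt (z1 ^ 2 + z2 ^ 2)).
  assert (Hr : 0 < r) by (apply sqrt_lt_R0; nra).
  assert (Hr2 : r * r = z1 ^ 2 + z2 ^ 2) by (apply sqrt_sqrt; nra).
  assert (Hc : -1 <= z1 / r <= 1).
  { assert (-r <= z1 <= r) by (split; nra).
    split; apply (Rmult_le_reg_r r); auto; unfold Rdiv; rewrite Rmult_assoc, Rinv_l; lra. }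
  exists r, (acos (z1 / r)). split; auto.
  assert (Hs : sin (acos (z1 / r)) = z2 / r).
  { rewrite sin_acos by auto. apply sqrt_eq_of_pow2; [apply Rdiv_le_0_compat; lra|].
    unfold Rsqr. replace (1 - z1 / r * (z1 / r)) with ((r * r - z1 * z1) / (r * r)) by (field; lra).
    replace ((z2 / r) ^ 2) with (z2 ^ 2 / (r * r)) by (field; lra). rewrite Hr2. field. nra. }
  assert (Hs0 : sin (acos (z1 / r)) <> 0).
  { rewrite Hs. apply Rmult_integral_contrapositive. split; [lra|]. apply Rinv_neq_0_compat; lra. }
  split.
  - pose proof (acos_bound (z1 / r)).
    split; [destruct (Req_dec (acos (z1 / r)) 0) as [E|E]|destruct (Req_dec (acos (z1 / r)) PI) as [E|E]];
      try lra; rewrite E in Hs0; [rewrite sin_0 in Hs0 | rewrite sin_PI in Hs0]; lra.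
  - rewrite cos_acos, Hs by auto. f_equal; field; lra.
Qed.

Lemma polar_lower z : snd z <= 0 -> z <> (0, 0) ->
  exists r a, 0 < r /\ PI <= a <= 2 * PI /\ z = (r * cos a, r * sin a).
Proof.
  destruct z as [z1 z2]; simpl. intros H2 Hnz. pose proof PI_RGT_0.
  destruct (Rlt_le_dec z2 0) as [Hlt|Hge].
  - destruct (polar_upper (- z1, - z2)) as [r [b [Hr [Hb E]]]]; simpl; [lra|].
    injection E as E1 E2. exists r, (b + PI). split; [auto|split; [lra|]].
    rewrite neg_cos, neg_sin. f_equal; lra.
  - assert (z2 = 0) by lra. subst z2.
    destruct (Rlt_le_dec z1 0).
    + exists (- z1), PI. split; [lra|split; [lra|]]. rewrite cos_PI, sin_PI. f_equal; ring.
    + destruct (Req_dec z1 0); [subst; contradiction|].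
      exists z1, (2 * PI). split; [lra|split; [lra|]]. rewrite cos_2PI, sin_2PI. f_equal; ring.
Qed.

Lemma sin_le_0_neg x : - PI <= x <= 0 -> sin x <= 0.
Proof. intros H. rewrite <- (Ropp_involutive x), sin_neg. pose proof (sin_ge_0 (- x)). lra. Qed.

Lemma sector_of_sides_convex th z : 0 < th <= PI -> 0 < side0 z -> 0 < side1 th z -> sector th z.
Proof.
  intros Hth HA HB. unfold side0 in HA.
  destruct (polar_upper z HA) as [r [a [Hr [Ha E]]]]. rewrite E, side1_polar in HB.
  exists r, a. repeat split; auto; try lra.
  destruct (Rlt_le_dec a th) as [|Hge]; auto.
  assert (sin (th - a) <= 0) by (apply sin_le_0_neg; lra). nra.
Qed.

Lemma sector_of_sides_reflex th z : PI < th < 2 * PI -> 0 < side0 z \/ 0 < side1 th z -> sector th z.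
Proof.
  intros Hth H. unfold side0 in H.
  destruct (Rlt_le_dec 0 (snd z)) as [Hup|Hdn].
  - destruct (polar_upper z Hup) as [r [a [Hr [Ha E]]]]. exists r, a. repeat split; auto; lra.
  - destruct H as [H|H]; [lra|].
    assert (Hnz : z <> (0,0)) by (intros ->; unfold side1 in H; simpl in H; lra).
    destruct (polar_lower z Hdn Hnz) as [r [a [Hr [Ha E]]]]. rewrite E, side1_polar in H.
    exists r, a. pose proof PI_RGT_0. repeat split; auto; try lra.
    destruct (Rlt_le_dec a th) as [|Hge]; auto.
    assert (sin (th - a) <= 0) by (apply sin_le_0_neg; lra). nra.
Qed.

Lemma sector_iff_convex th z : 0 < th <= PI -> (sector th z <-> 0 < side0 z /\ 0 < side1 th z).
Proof.
  intros Hth. pose proof PI_RGT_0. split.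
  - intros Hs. apply (sector_sides_pos th z); auto; lra.
  - intros [H1 H2]. apply sector_of_sides_convex; auto.
Qed.

Lemma sector_iff_reflex th z : PI < th < 2 * PI -> (sector th z <-> 0 < side0 z \/ 0 < side1 th z).
Proof.
  intros Hth. pose proof PI_RGT_0. split.
  - intros Hs. apply (sector_sides_pos th z); auto; lra.
  - apply sector_of_sides_reflex; auto.
Qed.

Lemma not_sector_convex th z : 0 < th <= PI -> ~ sector th z -> side0 z <= 0 \/ side1 th z <= 0.
Proof.
  intros Hth H. destruct (Rle_lt_dec (side0 z) 0); auto. destruct (Rle_lt_dec (side1 th z) 0); auto.
  exfalso. apply H, sector_iff_convex; auto.
Qed.

Lemma not_sector_reflex th z : PI < th < 2 * PI -> ~ sector th z -> side0 z <= 0 /\ side1 th z <= 0.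
Proof.
  intros Hth H. split; apply Rnot_lt_le; intros Hc; apply H, sector_iff_reflex; auto.
Qed.

Lemma boundary_not_sector th z : 0 < th < 2 * PI -> boundary (sector th) z -> ~ sector th z.
Proof.
  intros Hth Hbd Hs.
  assert (Hopen : forall r, 0 < r -> (forall w, cdist w z < r -> sector th w) -> False).
  { intros r Hr Hin. destruct (Hbd r Hr) as [_ [w [Hw Hd]]]. exact (Hw (Hin w Hd)). }
  destruct (Rle_lt_dec th PI) as [Hle|Hgt].
  - apply (sector_iff_convex th z) in Hs as [H0 H1]; [|lra].
    apply (Hopen (Rmin (side0 z) (side1 th z))); [apply Rmin_pos; lra|].
    intros w Hd. apply sector_iff_convex; [lra|].
    pose proof (Rmin_l (side0 z) (side1 th z)). pose proof (Rmin_r (side0 z) (side1 th z)).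
    pose proof (proj1 (Rabs_le_between' _ _ _) (side0_lipschitz w z)).
    pose proof (proj1 (Rabs_le_between' _ _ _) (side1_lipschitz th w z)).
    split; lra.
  - apply sector_iff_reflex in Hs; [|lra]. destruct Hs as [H|H].
    + apply (Hopen (side0 z) H). intros w Hd. apply sector_iff_reflex; [lra|]. left.
      pose proof (proj1 (Rabs_le_between' _ _ _) (side0_lipschitz w z)). lra.
    + apply (Hopen (side1 th z) H). intros w Hd. apply sector_iff_reflex; [lra|]. right.
      pose proof (proj1 (Rabs_le_between' _ _ _) (side1_lipschitz th w z)). lra.
Qed.

Lemma not_sector_origin th : ~ sector th (0, 0).
Proof.
  intros [r [phi [Hr [Hphi E]]]]. injection E as E1 E2.
  pose proof (sin_cos_pow2 phi).
  assert (cos phi = 0) by (apply Rmult_eq_reg_l with r; lra).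
  assert (sin phi = 0) by (apply Rmult_eq_reg_l with r; lra).
  nra.
Qed.

Lemma sector_boundary_ex th : 0 < th -> exists z, boundary (sector th) z.
Proof.
  intros H. apply (boundary_ex_of_compl _ (cos (th / 2), sin (th / 2)) (0, 0)).
  - exists 1, (th / 2). repeat split; try lra; f_equal; ring.
  - apply not_sector_origin.
Qed.

(** * Convex sectors *)

Section DomainInHalfPlane.

Variables (G : C -> Prop) (n1 n2 : R).
Hypothesis unit_normal : n1 ^ 2 + n2 ^ 2 = 1.
Hypothesis G_in_halfplane : forall w, lin n1 n2 w <= 0 -> ~ G w.

Let lin_pos x : G x -> 0 < lin n1 n2 x.
Proof. intros Gx. apply Rnot_le_lt. intros H. exact (G_in_halfplane x H Gx). Qed.

Lemma dG_le_lin x : G x -> dG G x <= lin n1 n2 x.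
Proof.
  intros Gx. pose proof (lin_pos x Gx).
  eapply Rle_trans; [apply (dG_le_compl _ x (foot n1 n2 x)); auto|].
  - apply G_in_halfplane. rewrite lin_foot; auto. lra.
  - rewrite cdist_foot, Rabs_right; auto; lra.
Qed.

Lemma sG_den_le_lin x y : G x -> G y ->
  sG_den G x y <= sqrt (cdist x y ^ 2 + 4 * lin n1 n2 x * lin n1 n2 y).
Proof.
  intros Gx Gy. pose proof (lin_pos x Gx). pose proof (lin_pos y Gy).
  eapply Rle_trans; [apply (sG_den_le_compl _ x y (crossing n1 n2 x y)); auto|].
  - apply G_in_halfplane. rewrite lin_crossing; auto; lra.
  - rewrite crossing_path_eq; auto; lra.
Qed.

End DomainInHalfPlane.

Lemma lin_le_dG (G : C -> Prop) n1 n2 x : n1 ^ 2 + n2 ^ 2 = 1 -> (exists z, boundary G z) ->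
  (forall z, boundary G z -> lin n1 n2 z <= 0) -> lin n1 n2 x <= dG G x.
Proof. intros Hn Hne Hbd. apply dG_glb; auto. intros z Hz. apply lin_le_cdist; auto. Qed.

Lemma cos_double_half th : cos th = 2 * cos (th / 2) ^ 2 - 1.
Proof. pose proof (cos_2a_cos (th / 2)). replace (2 * (th / 2)) with th in H by field. lra. Qed.

Lemma sin_double_half th : cos th = 1 - 2 * sin (th / 2) ^ 2.
Proof. pose proof (cos_2a_sin (th / 2)). replace (2 * (th / 2)) with th in H by field. lra. Qed.

Lemma sqrt2_cos_pow2 th : (sqrt 2 * cos (th / 4)) ^ 2 = 1 + cos (th / 2).
Proof.
  rewrite Rpow_mult_distr, pow2_sqrt, (cos_double_half (th / 2)) by lra.
  replace (th / 2 / 2) with (th / 4) by field. ring.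
Qed.

Lemma sqrt2_sin_pow2 th : (sqrt 2 * sin (th / 4)) ^ 2 = 1 - cos (th / 2).
Proof.
  rewrite Rpow_mult_distr, pow2_sqrt, (sin_double_half (th / 2)) by lra.
  replace (th / 2 / 2) with (th / 4) by field. ring.
Qed.

Lemma side_gaps_product_le th x y :
  (side1 th x - side0 x) * (side0 y - side1 th y) <= cos (th / 2) ^ 2 * cdist x y ^ 2.
Proof.
  set (P := side0 y - side1 th y). set (Q := side1 th x - side0 x).
  set (d1 := fst y - fst x). set (d2 := snd y - snd x).
  assert (EPQ : P + Q = - sin th * d1 + (1 + cos th) * d2) by (unfold P, Q, d1, d2, side0, side1; ring).
  assert (Et : cdist x y ^ 2 = d1 ^ 2 + d2 ^ 2) by (rewrite cdist_pow2; unfold d1, d2; ring).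
  pose proof (cauchy_schwarz2 (- sin th) (1 + cos th) d1 d2) as Hc.
  assert (Em : (- sin th) ^ 2 + (1 + cos th) ^ 2 = 4 * cos (th / 2) ^ 2).
  { pose proof (sin_cos_pow2 th). rewrite (cos_double_half th) in *. nra. }
  rewrite <- EPQ, Em, <- Et in Hc.
  pose proof (pow2_ge_0 (P - Q)). nra.
Qed.

(* [min (u u') (v v') - u v' = min (u (u' - v')) (v' (v - u))] is at most the
   geometric mean [sqrt (u v') s t], and [4 sqrt (u v') t <= t ^ 2 + 4 u v']. *)
Lemma mixed_min_product_le u v u' v' t s : 0 < u -> u <= v -> 0 < v' -> v' <= u' ->
  0 <= s -> 0 <= t -> (v - u) * (u' - v') <= s ^ 2 * t ^ 2 ->
  t ^ 2 + 4 * Rmin (u * u') (v * v') <= (1 + s) * (t ^ 2 + 4 * (u * v')).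
Proof.
  intros Hu Huv Hv' Hv'u' Hs Ht HPQ.
  set (m0 := Rmin (u * (u' - v')) (v' * (v - u))).
  assert (Hm : Rmin (u * u') (v * v') = u * v' + m0).
  { unfold m0, Rmin.
    destruct (Rle_dec (u * u') (v * v')); destruct (Rle_dec (u * (u' - v')) (v' * (v - u))); nra. }
  assert (Hm0 : 0 <= m0) by (unfold m0; apply Rmin_glb; nra).
  assert (Hm2 : m0 * m0 <= u * v' * (s ^ 2 * t ^ 2)).
  { assert (m0 * m0 <= (u * (u' - v')) * (v' * (v - u))).
    { assert (0 <= u * (u' - v')) by nra. assert (0 <= v' * (v - u)) by nra.
      unfold m0, Rmin. destruct (Rle_dec (u * (u' - v')) (v' * (v - u))); nra. }
    assert (0 <= u * v') by nra. nra. }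
  assert (4 * m0 <= s * (t ^ 2 + 4 * (u * v'))).
  { apply Rnot_lt_le. intros Hc.
    assert (0 <= s * (t ^ 2 + 4 * (u * v'))) by (apply Rmult_le_pos; nra).
    assert (Hsq : (s * (t ^ 2 + 4 * (u * v'))) ^ 2 < (4 * m0) ^ 2) by nra.
    assert (16 * (u * v') * t ^ 2 <= (t ^ 2 + 4 * (u * v')) ^ 2)
      by (pose proof (pow2_ge_0 (t ^ 2 - 4 * (u * v'))); nra).
    assert (s ^ 2 * (16 * (u * v') * t ^ 2) <= s ^ 2 * (t ^ 2 + 4 * (u * v')) ^ 2)
      by (apply Rmult_le_compat_l; nra).
    nra. }
  rewrite Hm. nra.
Qed.

Lemma min_products_le a b a' b' t s : 0 < a -> 0 < b -> 0 < a' -> 0 < b' -> 0 <= s -> 0 <= t ->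
  (b - a) * (a' - b') <= s ^ 2 * t ^ 2 -> (a - b) * (b' - a') <= s ^ 2 * t ^ 2 ->
  t ^ 2 + 4 * Rmin (a * a') (b * b') <= (1 + s) * (t ^ 2 + 4 * (Rmin a b * Rmin a' b')).
Proof.
  intros Ha Hb Ha' Hb' Hs Ht H1 H2.
  pose proof (Rmin_l (a * a') (b * b')). pose proof (Rmin_r (a * a') (b * b')).
  assert (0 <= s * (t ^ 2 + 4 * (a * a'))) by (apply Rmult_le_pos; nra).
  assert (0 <= s * (t ^ 2 + 4 * (b * b'))) by (apply Rmult_le_pos; nra).
  destruct (Rle_dec a b) as [h|h]; destruct (Rle_dec a' b') as [h'|h'].
  - rewrite (Rmin_left a), (Rmin_left a') by lra. nra.
  - rewrite (Rmin_left a), (Rmin_right a') by lra. apply mixed_min_product_le; lra.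
  - rewrite (Rmin_right a), (Rmin_left a') by lra.
    pose proof (mixed_min_product_le a' b' a b t s) as K.
    rewrite (Rmult_comm a' a), (Rmult_comm b' b), (Rmult_comm a' b) in K.
    apply K; lra.
  - rewrite (Rmin_right a), (Rmin_right a') by lra. nra.
Qed.

Section ConvexSector.

Variable th : R.
Hypothesis Hth : 0 < th <= PI.

Let sector_side0 w : side0 w <= 0 -> ~ sector th w.
Proof. intros Hw Hs. apply sector_iff_convex in Hs; auto. lra. Qed.

Let sector_side1 w : side1 th w <= 0 -> ~ sector th w.
Proof. intros Hw Hs. apply sector_iff_convex in Hs; auto. lra. Qed.

Let boundary_sides z : boundary (sector th) z -> side0 z <= 0 \/ side1 th z <= 0.
Proof. intros Hz. apply not_sector_convex, boundary_not_sector; auto. lra. Qed.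

Let boundary_ex : exists z, boundary (sector th) z.
Proof. apply sector_boundary_ex. lra. Qed.

Lemma convex_dG_eq x : sector th x -> dG (sector th) x = Rmin (side0 x) (side1 th x).
Proof.
  intros Hx. apply Rle_antisym.
  - apply Rmin_glb.
    + rewrite side0_lin. apply dG_le_lin; auto using unit_side0.
      intros w. rewrite <- side0_lin. auto.
    + rewrite side1_lin. apply dG_le_lin; auto using unit_side1.
      intros w. rewrite <- side1_lin. auto.
  - apply dG_glb; auto. intros z Hz.
    pose proof (Rmin_l (side0 x) (side1 th x)). pose proof (Rmin_r (side0 x) (side1 th x)).
    destruct (boundary_sides z Hz) as [Hz0|Hz1].
    + rewrite side0_lin in *. pose proof (lin_le_cdist 0 1 unit_side0 x z Hz0). lra.
    + rewrite side1_lin in *. pose proof (lin_le_cdist _ _ (unit_side1 th) x z Hz1). lra.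
Qed.

Lemma convex_dG_pos x : sector th x -> 0 < dG (sector th) x.
Proof.
  intros Hx. rewrite convex_dG_eq by auto.
  apply sector_iff_convex in Hx as [H0 H1]; auto. apply Rmin_pos; auto.
Qed.

Lemma convex_sG_den_ge x y : sector th x -> sector th y ->
  Rmin (sqrt (cdist x y ^ 2 + 4 * side0 x * side0 y))
       (sqrt (cdist x y ^ 2 + 4 * side1 th x * side1 th y)) <= sG_den (sector th) x y.
Proof.
  intros Hx Hy.
  apply sector_iff_convex in Hx as [Hx0 Hx1]; auto. apply sector_iff_convex in Hy as [Hy0 Hy1]; auto.
  apply sG_den_glb; auto. intros z Hz.
  destruct (boundary_sides z Hz) as [Hz0|Hz1].
  - eapply Rle_trans; [apply Rmin_l|]. rewrite !side0_lin in *.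
    apply halfplane_path_ge; auto using unit_side0; lra.
  - eapply Rle_trans; [apply Rmin_r|]. rewrite !side1_lin in *.
    apply halfplane_path_ge; auto using unit_side1; lra.
Qed.

Lemma convex_sG_den_le x y : sector th x -> sector th y ->
  sG_den (sector th) x y <= sqrt (cdist x y ^ 2 + 4 * Rmin (side0 x * side0 y) (side1 th x * side1 th y)).
Proof.
  intros Hx Hy. unfold Rmin. destruct (Rle_dec _ _); rewrite <- Rmult_assoc.
  - rewrite !side0_lin. apply sG_den_le_lin; auto using unit_side0.
    intros w. rewrite <- side0_lin. auto.
  - rewrite !side1_lin. apply sG_den_le_lin; auto using unit_side1.
    intros w. rewrite <- side1_lin. auto.
Qed.

Section TwoPoints.

Variables x y : C.
Hypotheses (Hx : sector th x) (Hy : sector th y).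

Let pG_den := sqrt (cdist x y ^ 2 + 4 * dG (sector th) x * dG (sector th) y).

Lemma convex_pG_den_le_sG_den : pG_den <= sG_den (sector th) x y.
Proof.
  eapply Rle_trans; [|apply convex_sG_den_ge; auto].
  unfold pG_den. rewrite !convex_dG_eq by auto.
  pose proof (pow2_ge_0 (cdist x y)).
  apply sector_iff_convex in Hx as [Hx0 Hx1]; auto. apply sector_iff_convex in Hy as [Hy0 Hy1]; auto.
  pose proof (Rmin_l (side0 x) (side1 th x)). pose proof (Rmin_r (side0 x) (side1 th x)).
  pose proof (Rmin_l (side0 y) (side1 th y)). pose proof (Rmin_r (side0 y) (side1 th y)).
  pose proof (Rmin_pos _ _ Hx0 Hx1). pose proof (Rmin_pos _ _ Hy0 Hy1).
  apply Rmin_glb; apply sqrt_le_1_alt; nra.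
Qed.

Lemma convex_sG_den_le_scaled :
  sG_den (sector th) x y <= sqrt 2 * cos (th / 4) * pG_den.
Proof.
  assert (Hs : 0 <= cos (th / 2)) by (apply cos_ge_0; lra).
  assert (0 < cos (th / 4)) by (apply cos_gt_0; lra). pose proof sqrt2_pos.
  eapply Rle_trans; [apply convex_sG_den_le; auto|].
  unfold pG_den. rewrite <- (sqrt_pow2 (sqrt 2 * cos (th / 4))) by nra.
  rewrite <- sqrt_mult, sqrt2_cos_pow2 by (nra || (pose proof (pow2_ge_0 (cdist x y));
    pose proof (convex_dG_pos x Hx); pose proof (convex_dG_pos y Hy); nra)).
  apply sqrt_le_1_alt. rewrite !convex_dG_eq by auto. rewrite Rmult_assoc.
  apply sector_iff_convex in Hx as [Hx0 Hx1]; auto. apply sector_iff_convex in Hy as [Hy0 Hy1]; auto.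
  pose proof (side_gaps_product_le th x y). pose proof (side_gaps_product_le th y x).
  rewrite cdist_sym in *.
  apply min_products_le; auto using cdist_ge0; nra.
Qed.

End TwoPoints.

Lemma convex_sG_le_pG x y : sector th x -> sector th y -> sG (sector th) x y <= pG (sector th) x y.
Proof.
  intros Hx Hy. rewrite <- (Rmult_1_l (pG _ x y)).
  apply sG_le_pG_scaled; auto using convex_dG_pos; try lra.
  rewrite Rmult_1_l. apply convex_pG_den_le_sG_den; auto.
Qed.

Lemma convex_pG_le_sG x y : sector th x -> sector th y ->
  pG (sector th) x y <= sqrt 2 * cos (th / 4) * sG (sector th) x y.
Proof.
  intros Hx Hy. pose proof sqrt2_pos. assert (0 < cos (th / 4)) by (apply cos_gt_0; lra).
  apply pG_le_sG_scaled; auto using convex_dG_pos, convex_sG_den_le_scaled.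
  apply Rmult_lt_0_compat; auto.
Qed.

End ConvexSector.

(** * Reflex sectors *)

Lemma dot_product_form_le a1 a2 c1 c2 y1 y2 K : 0 <= K ->
  (a1 ^ 2 + a2 ^ 2) * (c1 ^ 2 + c2 ^ 2) <= K ^ 2 ->
  (a1 * y1 + a2 * y2) * (c1 * y1 + c2 * y2) - (a1 * c1 + a2 * c2) * (y1 ^ 2 + y2 ^ 2) / 2
  <= K / 2 * (y1 ^ 2 + y2 ^ 2).
Proof.
  intros HK H.
  set (al := (a1 * c1 - a2 * c2) / 2). set (be := (a1 * c2 + a2 * c1) / 2).
  set (Q := (a1 * y1 + a2 * y2) * (c1 * y1 + c2 * y2) - (a1 * c1 + a2 * c2) * (y1 ^ 2 + y2 ^ 2) / 2).
  assert (EQ : Q = al * (y1 ^ 2 - y2 ^ 2) + be * (2 * y1 * y2)) by (unfold Q, al, be; field).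
  pose proof (cauchy_schwarz2 al be (y1 ^ 2 - y2 ^ 2) (2 * y1 * y2)) as Hc.
  rewrite <- EQ in Hc.
  replace ((y1 ^ 2 - y2 ^ 2) ^ 2 + (2 * y1 * y2) ^ 2) with ((y1 ^ 2 + y2 ^ 2) ^ 2) in Hc by ring.
  replace (al ^ 2 + be ^ 2) with ((a1 ^ 2 + a2 ^ 2) * (c1 ^ 2 + c2 ^ 2) / 4) in Hc by (unfold al, be; field).
  set (Y := y1 ^ 2 + y2 ^ 2) in *. assert (HY : 0 <= Y) by (unfold Y; nra).
  assert (0 <= K / 2 * Y) by (apply Rmult_le_pos; lra).
  assert (Q ^ 2 <= (K / 2 * Y) ^ 2).
  { eapply Rle_trans; [exact Hc|]. replace ((K / 2 * Y) ^ 2) with (K ^ 2 / 4 * Y ^ 2) by field.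
    apply Rmult_le_compat_r; nra. }
  nra.
Qed.

Lemma two_normal_form_le n1 n2 m1 m2 r a1 a2 b1 b2 :
  n1 ^ 2 + n2 ^ 2 = 1 -> m1 ^ 2 + m2 ^ 2 = 1 -> 0 <= r ->
  2 - 2 * (n1 * m1 + n2 * m2) <= r ^ 2 ->
  2 * (n1 * a1 + n2 * a2) * (m1 * b1 + m2 * b2) - (a1 * b1 + a2 * b2)
  <= (1 + r) * (sqrt (a1 ^ 2 + a2 ^ 2) * sqrt (b1 ^ 2 + b2 ^ 2)).
Proof.
  intros Hn Hm Hr Hnm.
  set (mb := m1 * b1 + m2 * b2).
  set (M1 := 2 * mb * n1 - b1). set (M2 := 2 * mb * n2 - b2).
  replace (2 * (n1 * a1 + n2 * a2) * mb - (a1 * b1 + a2 * b2)) with (a1 * M1 + a2 * M2)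
    by (unfold M1, M2; ring).
  pose proof (dot_le_Cmod (a1, a2) M1 M2) as H1. unfold Cmod in H1. cbn [fst snd] in H1.
  assert (HM : sqrt (M1 ^ 2 + M2 ^ 2) <= (1 + r) * sqrt (b1 ^ 2 + b2 ^ 2)).
  { rewrite <- (sqrt_pow2 (1 + r)), <- sqrt_mult by (lra || nra). apply sqrt_le_1_alt.
    assert (EM : M1 ^ 2 + M2 ^ 2 = 4 * mb * ((m1 - n1) * b1 + (m2 - n2) * b2) + (b1 ^ 2 + b2 ^ 2)
                                   + 4 * mb ^ 2 * (n1 ^ 2 + n2 ^ 2 - 1)) by (unfold M1, M2, mb; ring).
    rewrite Hn, Rminus_diag, Rmult_0_r, Rplus_0_r in EM.
    pose proof (dot_product_form_le m1 m2 (m1 - n1) (m2 - n2) b1 b2 r Hr) as Q.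
    assert (Hd : m1 * (m1 - n1) + m2 * (m2 - n2) = 1 - (n1 * m1 + n2 * m2)) by nra.
    assert (Hmn : (m1 - n1) ^ 2 + (m2 - n2) ^ 2 = 2 - 2 * (n1 * m1 + n2 * m2)) by nra.
    rewrite Hm, Hmn, Rmult_1_l, Hd in Q. specialize (Q Hnm). fold mb in Q.
    assert (0 <= b1 ^ 2 + b2 ^ 2) by nra.
    assert ((1 - (n1 * m1 + n2 * m2)) * (b1 ^ 2 + b2 ^ 2) <= r ^ 2 / 2 * (b1 ^ 2 + b2 ^ 2))
      by (apply Rmult_le_compat_r; lra).
    nra. }
  assert (0 <= sqrt (a1 ^ 2 + a2 ^ 2)) by apply sqrt_pos.
  assert (sqrt (a1 ^ 2 + a2 ^ 2) * sqrt (M1 ^ 2 + M2 ^ 2)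
          <= sqrt (a1 ^ 2 + a2 ^ 2) * ((1 + r) * sqrt (b1 ^ 2 + b2 ^ 2)))
    by (apply Rmult_le_compat_l; auto).
  lra.
Qed.

Section ReflexSector.

Variable th : R.
Hypothesis Hth : PI < th < 2 * PI.

Let sin_th_neg : sin th < 0.
Proof. apply sin_lt_0; lra. Qed.

Let sin_cos_th : sin th ^ 2 + cos th ^ 2 = 1.
Proof. apply sin_cos_pow2. Qed.

Let boundary_ex : exists z, boundary (sector th) z.
Proof. apply sector_boundary_ex. lra. Qed.

Lemma reflex_boundary_sides z : boundary (sector th) z -> side0 z <= 0 /\ side1 th z <= 0.
Proof. intros Hz. apply not_sector_reflex, boundary_not_sector; auto. lra. Qed.

Lemma reflex_dG_le_cdist x w : sector th x -> side0 w <= 0 -> side1 th w <= 0 ->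
  dG (sector th) x <= cdist x w.
Proof.
  intros Hx Hw0 Hw1. apply dG_le_compl; auto.
  intros Hw. apply sector_iff_reflex in Hw; auto. lra.
Qed.

Lemma reflex_side0_le_dG x : side0 x <= dG (sector th) x.
Proof.
  rewrite side0_lin. apply lin_le_dG; auto using unit_side0.
  intros z Hz. rewrite <- side0_lin. apply reflex_boundary_sides, Hz.
Qed.

Lemma reflex_side1_le_dG x : side1 th x <= dG (sector th) x.
Proof.
  rewrite side1_lin. apply lin_le_dG; auto using unit_side1.
  intros z Hz. rewrite <- side1_lin. apply reflex_boundary_sides, Hz.
Qed.

Lemma reflex_dG_pos x : sector th x -> 0 < dG (sector th) x.
Proof.
  intros Hx. apply sector_iff_reflex in Hx; auto.
  pose proof (reflex_side0_le_dG x). pose proof (reflex_side1_le_dG x). lra.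
Qed.

Lemma reflex_dG_le_side0_gap x z : sector th x -> side0 z <= 0 -> side1 th z <= 0 ->
  0 <= fst x - fst z -> dG (sector th) x <= Rabs (side0 x - side0 z).
Proof.
  intros Hx Hz0 Hz1 Hxz. pose proof sin_th_neg.
  eapply Rle_trans; [apply (reflex_dG_le_cdist x (fst x, snd z)); auto|].
  - assert (0 <= (fst x - fst z) * - sin th) by (apply Rmult_le_pos; lra).
    unfold side1 in *; simpl. lra.
  - rewrite cdist_sqrt, <- sqrt_Rsqr_abs. unfold side0, Rsqr; simpl.
    apply Req_le. f_equal. ring.
Qed.

Lemma reflex_dG_le_side1_gap x z : sector th x -> side0 z <= 0 -> side1 th z <= 0 ->
  0 <= along1 th x - along1 th z -> dG (sector th) x <= Rabs (side1 th x - side1 th z).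
Proof.
  intros Hx Hz0 Hz1 Hxz. pose proof sin_th_neg. set (k := along1 th x - along1 th z) in *.
  eapply Rle_trans; [apply (reflex_dG_le_cdist x (fst z + k * cos th, snd z + k * sin th)); auto|].
  - assert (0 <= k * - sin th) by (apply Rmult_le_pos; lra).
    unfold side0 in *; simpl. lra.
  - unfold side1 in *; simpl. replace ((fst z + k * cos th) * sin th - (snd z + k * sin th) * cos th)
      with (fst z * sin th - snd z * cos th) by ring. lra.
  - rewrite cdist_sqrt, <- sqrt_Rsqr_abs. apply Req_le. f_equal.
    unfold k, along1, side1, Rsqr; simpl.
    transitivity (((fst x - fst z) * sin th - (snd x - snd z) * cos th) ^ 2
      + ((fst x - fst z) ^ 2 + (snd x - snd z) ^ 2 - ((fst x - fst z) * cos th + (snd x - snd z) * sin th) ^ 2)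
        * (1 - (sin th ^ 2 + cos th ^ 2))); [ring|].
    rewrite sin_cos_th. ring.
Qed.

Lemma reflex_side_cases v : 0 < side0 v \/ 0 < side1 th v ->
  ~ (fst v <= 0 /\ along1 th v <= 0) ->
  (0 < fst v /\ 0 < side0 v) \/ (0 < along1 th v /\ 0 < side1 th v).
Proof.
  intros Hv Hcone. pose proof sin_th_neg.
  assert (E : fst v * side1 th v + side0 v * along1 th v = sin th * (fst v ^ 2 + snd v ^ 2))
    by (unfold side0, side1, along1; ring).
  assert (0 <= fst v ^ 2 + snd v ^ 2) by (apply Rplus_le_le_0_compat; apply pow2_ge_0).
  destruct (Rlt_le_dec 0 (fst v)) as [Hf|Hf]; destruct (Rlt_le_dec 0 (along1 th v)) as [Ha|Ha];
    try tauto; destruct Hv as [Hv|Hv].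
  - left. split; auto.
  - left. split; auto. nra.
  - right. split; auto. nra.
  - right. split; auto.
Qed.

(* (n1, n2) is a unit vector of the polar cone of the complement
   [side0 <= 0 /\ side1 th <= 0] of the sector. *)
Lemma reflex_dG_le_cone_normal x z : sector th x -> side0 z <= 0 -> side1 th z <= 0 ->
  exists n1 n2, n1 ^ 2 + n2 ^ 2 = 1 /\ n1 <= 0 /\ n1 * cos th + n2 * sin th <= 0 /\
    dG (sector th) x <= n1 * (fst x - fst z) + n2 * (snd x - snd z).
Proof.
  intros Hx Hz0 Hz1. pose proof sin_th_neg. pose proof sin_cos_th.
  set (v := (fst x - fst z, snd x - snd z)).
  assert (Hv : 0 < side0 v \/ 0 < side1 th v).
  { apply sector_iff_reflex in Hx; auto. unfold v, side0, side1 in *; simpl. lra. }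
  destruct (classic (fst v <= 0 /\ along1 th v <= 0)) as [[Hv0 Hv1]|Hcone].
  - assert (Hpos : 0 < Cmod v).
    { apply Cmod_gt_0. intros E. rewrite E in Hv. unfold side0, side1 in Hv; simpl in Hv. lra. }
    pose proof (Cmod_mult_self v) as Hv2.
    exists (fst v / Cmod v), (snd v / Cmod v). repeat split.
    + replace ((fst v / Cmod v) ^ 2 + (snd v / Cmod v) ^ 2)
        with ((fst v ^ 2 + snd v ^ 2) / (Cmod v * Cmod v)) by (field; lra).
      rewrite Hv2. field. nra.
    + unfold Rdiv. apply Rmult_le_0_r; [lra | apply Rlt_le, Rinv_0_lt_compat; lra].
    + replace (fst v / Cmod v * cos th + snd v / Cmod v * sin th) with (along1 th v / Cmod v)
        by (unfold along1; field; lra).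
      unfold Rdiv. apply Rmult_le_0_r; [lra | apply Rlt_le, Rinv_0_lt_compat; lra].
    + change (fst x - fst z) with (fst v). change (snd x - snd z) with (snd v).
      replace (fst v / Cmod v * fst v + snd v / Cmod v * snd v)
        with ((fst v ^ 2 + snd v ^ 2) / Cmod v) by (field; lra).
      rewrite <- Hv2. replace (Cmod v * Cmod v / Cmod v) with (cdist x z).
      * apply reflex_dG_le_cdist; auto.
      * assert (E : Cmod v = cdist x z) by (rewrite cdist_sqrt; reflexivity).
        rewrite <- E. field. lra.
  - destruct (reflex_side_cases v Hv Hcone) as [[Hf Hs]|[Ha Hs]].
    + exists 0, 1. repeat split; try lra.
      eapply Rle_trans; [apply (reflex_dG_le_side0_gap x z); auto; unfold v in Hf; simpl in Hf; lra|].
      unfold v, side0 in *; simpl in *. rewrite Rabs_right; lra.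
    + exists (sin th), (- cos th). repeat split; try lra.
      eapply Rle_trans; [apply (reflex_dG_le_side1_gap x z); auto|].
      * unfold v, along1 in *; simpl in *. lra.
      * unfold v, side1 in *; simpl in *. rewrite Rabs_right; lra.
Qed.

Lemma cone_normal_angle n1 n2 : n1 ^ 2 + n2 ^ 2 = 1 -> n1 <= 0 -> n1 * cos th + n2 * sin th <= 0 ->
  exists a, 0 <= a <= th - PI /\ n1 = - sin a /\ n2 = cos a.
Proof.
  intros Hn H1 H2. assert (Hb : -1 <= n2 <= 1) by (split; nra).
  exists (acos n2). pose proof (acos_bound n2).
  assert (Hs : sin (acos n2) = - n1).
  { rewrite sin_acos by auto. apply sqrt_eq_of_pow2; [lra|]. unfold Rsqr. nra. }
  assert (Hc : cos (acos n2) = n2) by (apply cos_acos; auto).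
  repeat split; try lra.
  apply Rnot_lt_le. intros Hlt.
  assert (Hsn : 0 < sin (th - acos n2)) by (apply sin_gt_0; lra).
  rewrite sin_minus, Hs, Hc in Hsn. nra.
Qed.

Lemma cone_normals_dot_ge n1 n2 m1 m2 :
  n1 ^ 2 + n2 ^ 2 = 1 -> n1 <= 0 -> n1 * cos th + n2 * sin th <= 0 ->
  m1 ^ 2 + m2 ^ 2 = 1 -> m1 <= 0 -> m1 * cos th + m2 * sin th <= 0 ->
  - cos th <= n1 * m1 + n2 * m2.
Proof.
  intros Hn Hn1 Hn2 Hm Hm1 Hm2.
  destruct (cone_normal_angle n1 n2) as [a [Ha [-> ->]]]; auto.
  destruct (cone_normal_angle m1 m2) as [b [Hb [-> ->]]]; auto.
  replace (- sin a * - sin b + cos a * cos b) with (cos (a - b)) by (rewrite cos_minus; ring).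
  replace (- cos th) with (cos (th - PI)) by (rewrite cos_minus, cos_PI, sin_PI; ring).
  destruct (Rle_lt_dec b a).
  - apply cos_decr_1; lra.
  - rewrite (cos_sym (a - b)). replace (- (a - b)) with (b - a) by ring. apply cos_decr_1; lra.
Qed.

Lemma reflex_pG_den_sq_le x y z : sector th x -> sector th y -> boundary (sector th) z ->
  cdist x y ^ 2 + 4 * dG (sector th) x * dG (sector th) y
  <= (1 - cos (th / 2)) * (cdist x z + cdist z y) ^ 2.
Proof.
  intros Hx Hy Hz. destruct (reflex_boundary_sides z Hz) as [Hz0 Hz1].
  destruct (reflex_dG_le_cone_normal x z Hx Hz0 Hz1) as [n1 [n2 [Hn [Hn1 [Hn2 Hdx]]]]].
  destruct (reflex_dG_le_cone_normal y z Hy Hz0 Hz1) as [m1 [m2 [Hm [Hm1 [Hm2 Hdy]]]]].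
  set (s := cos (th / 2)).
  assert (Hs : s < 0) by (unfold s; apply cos_lt_0; lra).
  assert (Hr2 : 2 - 2 * (n1 * m1 + n2 * m2) <= (- 2 * s) ^ 2).
  { pose proof (cone_normals_dot_ge n1 n2 m1 m2 Hn Hn1 Hn2 Hm Hm1 Hm2).
    unfold s. rewrite (cos_double_half th) in H. nra. }
  pose proof (two_normal_form_le n1 n2 m1 m2 (- 2 * s) (fst x - fst z) (snd x - snd z)
    (fst y - fst z) (snd y - snd z) Hn Hm ltac:(lra) Hr2) as Hform.
  rewrite <- !cdist_sqrt, (cdist_sym y z) in Hform.
  pose proof (reflex_dG_pos x Hx). pose proof (reflex_dG_pos y Hy).
  assert (Hdd : dG (sector th) x * dG (sector th) y
                <= (n1 * (fst x - fst z) + n2 * (snd x - snd z)) * (m1 * (fst y - fst z) + m2 * (snd y - snd z)))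
    by (apply Rmult_le_compat; lra).
  replace (cdist x y ^ 2) with (cdist x z ^ 2 + cdist z y ^ 2
    - 2 * ((fst x - fst z) * (fst y - fst z) + (snd x - snd z) * (snd y - snd z)))
    by (rewrite (cdist_sym z y), !cdist_pow2; ring).
  pose proof (cdist_ge0 x z). pose proof (cdist_ge0 z y).
  assert (0 <= - s * (cdist x z - cdist z y) ^ 2) by (apply Rmult_le_pos; [lra|apply pow2_ge_0]).
  nra.
Qed.

Lemma reflex_sG_le_pG x y : sector th x -> sector th y ->
  sG (sector th) x y <= sqrt 2 * sin (th / 4) * pG (sector th) x y.
Proof.
  intros Hx Hy. set (c := sqrt 2 * sin (th / 4)).
  assert (Hc : 0 < c) by (apply Rmult_lt_0_compat; [apply sqrt2_pos | apply sin_gt_0; lra]).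
  apply sG_le_pG_scaled; auto using reflex_dG_pos.
  enough (sqrt (cdist x y ^ 2 + 4 * dG (sector th) x * dG (sector th) y) / c <= sG_den (sector th) x y)
    by (apply Rmult_le_reg_r with (/ c); [apply Rinv_0_lt_compat; lra|];
        replace (c * sG_den (sector th) x y * / c) with (sG_den (sector th) x y) by (field; lra);
        exact H).
  apply sG_den_glb; auto. intros z Hz.
  pose proof (reflex_pG_den_sq_le x y z Hx Hy Hz) as K. rewrite <- sqrt2_sin_pow2 in K. fold c in K.
  pose proof (cdist_ge0 x z). pose proof (cdist_ge0 z y).
  unfold Rdiv. apply Rmult_le_reg_r with c; auto. rewrite Rmult_assoc, Rinv_l, Rmult_1_r by lra.
  apply sqrt_le_of_le_pow2; nra.
Qed.

End ReflexSector.

(* A positive multiple of x / |x| + y / |y|, pointing along the bisector of the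
   angle xOy; [x, y] meets this ray at (|y| x + |x| y) / (|x| + |y|). *)
Definition bisector_dir (x y : C) : C :=
  (Cmod y * fst x + Cmod x * fst y, Cmod y * snd x + Cmod x * snd y).

Lemma bisector_dir_dots x y :
  let P := Cmod x * Cmod y + (fst x * fst y + snd x * snd y) in
  Cmod (bisector_dir x y) * Cmod (bisector_dir x y) = 2 * Cmod x * Cmod y * P /\
  fst (bisector_dir x y) * fst x + snd (bisector_dir x y) * snd x = Cmod x * P /\
  fst (bisector_dir x y) * fst y + snd (bisector_dir x y) * snd y = Cmod y * P.
Proof.
  intros P. pose proof (Cmod_mult_self x) as Ex. pose proof (Cmod_mult_self y) as Ey.
  rewrite Cmod_mult_self. unfold bisector_dir, P; simpl. repeat split.
  - transitivity (Cmod y * Cmod y * (fst x ^ 2 + snd x ^ 2) + Cmod x * Cmod x * (fst y ^ 2 + snd y ^ 2)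
      + 2 * Cmod x * Cmod y * (fst x * fst y + snd x * snd y)); [ring|].
    rewrite <- Ex, <- Ey. ring.
  - transitivity (Cmod y * (fst x ^ 2 + snd x ^ 2) + Cmod x * (fst x * fst y + snd x * snd y)); [ring|].
    rewrite <- Ex. ring.
  - transitivity (Cmod x * (fst y ^ 2 + snd y ^ 2) + Cmod y * (fst x * fst y + snd x * snd y)); [ring|].
    rewrite <- Ey. ring.
Qed.

Lemma Cmod_mult_ge_dot x y : - (fst x * fst y + snd x * snd y) <= Cmod x * Cmod y.
Proof.
  pose proof (dot_le_Cmod x (- fst y) (- snd y)) as K.
  replace ((- fst y) ^ 2 + (- snd y) ^ 2) with (fst y ^ 2 + snd y ^ 2) in K by ring.
  fold (Cmod y) in K. lra.
Qed.

Lemma unit_sum_pos_sq_lt a1 a2 b1 b2 na nb : 0 < na -> 0 < nb ->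
  na * na = a1 ^ 2 + a2 ^ 2 -> nb * nb = b1 ^ 2 + b2 ^ 2 ->
  0 <= a1 -> b1 <= 0 -> 0 < nb * a1 + na * b1 -> a2 ^ 2 * b1 ^ 2 < b2 ^ 2 * a1 ^ 2.
Proof.
  intros Ha Hb Ea Eb Ha1 Hb1 H.
  assert (0 <= na * - b1) by nra.
  assert ((na * - b1) * (na * - b1) < (nb * a1) * (nb * a1)) by nra.
  nra.
Qed.

Lemma upper_pair_cross_nonneg x y : 0 < snd x -> 0 < snd y -> 0 < fst (bisector_dir x y) ->
  0 <= fst x * snd y + fst y * snd x.
Proof.
  intros Hx2 Hy2 Hq. unfold bisector_dir in Hq; simpl in Hq.
  assert (Hx : 0 < Cmod x) by (apply Cmod_gt_0; intros E; rewrite E in Hx2; simpl in Hx2; lra).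
  assert (Hy : 0 < Cmod y) by (apply Cmod_gt_0; intros E; rewrite E in Hy2; simpl in Hy2; lra).
  pose proof (Cmod_mult_self x). pose proof (Cmod_mult_self y).
  destruct (Rle_lt_dec 0 (fst x)); destruct (Rle_lt_dec 0 (fst y)).
  - nra.
  - assert (snd x ^ 2 * fst y ^ 2 < snd y ^ 2 * fst x ^ 2)
      by (apply unit_sum_pos_sq_lt with (Cmod x) (Cmod y); auto; lra).
    assert (0 <= fst x * snd y) by nra. assert (0 < - (fst y * snd x)) by nra. nra.
  - assert (snd y ^ 2 * fst x ^ 2 < snd x ^ 2 * fst y ^ 2)
      by (apply unit_sum_pos_sq_lt with (Cmod y) (Cmod x); auto; lra).
    assert (0 <= fst y * snd x) by nra. assert (0 < - (fst x * snd y)) by nra. nra.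
  - nra.
Qed.

Lemma mixed_pair_cross_nonneg x y : snd x <= 0 -> 0 < snd y ->
  0 < fst (bisector_dir x y) -> 0 < snd (bisector_dir x y) -> 0 <= fst x * snd y - snd x * fst y.
Proof.
  intros Hx2 Hy2 Hq1 Hq2. unfold bisector_dir in Hq1, Hq2; simpl in Hq1, Hq2.
  assert (Hy : 0 < Cmod y) by (apply Cmod_gt_0; intros E; rewrite E in Hy2; simpl in Hy2; lra).
  assert (Hx : 0 < Cmod x).
  { apply Cmod_gt_0. intros E. rewrite E in Hq1; simpl in Hq1. rewrite Cmod_0 in Hq1. lra. }
  pose proof (Cmod_mult_self x). pose proof (Cmod_mult_self y).
  destruct (Rle_lt_dec 0 (fst x)); destruct (Rle_lt_dec 0 (fst y)).
  - nra.
  - assert (snd x ^ 2 * fst y ^ 2 < snd y ^ 2 * fst x ^ 2)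
      by (apply unit_sum_pos_sq_lt with (Cmod x) (Cmod y); auto; lra).
    assert (0 <= fst x * snd y) by nra. assert (0 <= snd x * fst y) by nra. nra.
  - assert (snd y ^ 2 * fst x ^ 2 < snd x ^ 2 * fst y ^ 2)
      by (apply unit_sum_pos_sq_lt with (Cmod y) (Cmod x); auto; lra).
    assert (fst y ^ 2 * snd x ^ 2 < fst x ^ 2 * snd y ^ 2)
      by (apply unit_sum_pos_sq_lt with (Cmod y) (Cmod x); auto; nra).
    lra.
  - nra.
Qed.

Lemma segment_meets_positive_axis x y : snd x <= 0 -> 0 < snd y ->
  0 < fst (bisector_dir x y) -> 0 < snd (bisector_dir x y) ->
  exists w, snd w = 0 /\ 0 <= fst w /\ cdist x w + cdist w y = cdist x y.
Proof.
  intros Hx2 Hy2 Hq1 Hq2. pose proof (mixed_pair_cross_nonneg x y Hx2 Hy2 Hq1 Hq2).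
  set (l := snd x / (snd x - snd y)).
  assert (Hl : 0 <= l <= 1).
  { unfold l. replace (snd x / (snd x - snd y)) with (- snd x / (snd y - snd x)) by (field; lra).
    split; [apply Rdiv_le_0_compat; lra|].
    apply Rmult_le_reg_r with (snd y - snd x); [lra|].
    unfold Rdiv. rewrite Rmult_assoc, Rinv_l; lra. }
  exists (seg x y l). repeat split.
  - unfold seg, l; simpl. field. lra.
  - unfold seg, l; simpl.
    replace (fst x + snd x / (snd x - snd y) * (fst y - fst x))
      with ((fst x * snd y - snd x * fst y) / (snd y - snd x)) by (field; lra).
    apply Rdiv_le_0_compat; lra.
  - apply cdist_seg_split, Hl.
Qed.

Lemma bisector_dir_comm x y : bisector_dir y x = bisector_dir x y.
Proof. unfold bisector_dir. f_equal; ring. Qed.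

Lemma positive_axis_path x y : 0 < fst (bisector_dir x y) -> 0 < snd (bisector_dir x y) ->
  exists w, snd w = 0 /\ 0 <= fst w /\
    (cdist x w + cdist w y = cdist x y \/
     (0 < snd x /\ 0 < snd y /\ cdist x w + cdist w y = sqrt (cdist x y ^ 2 + 4 * snd x * snd y))).
Proof.
  intros Hq1 Hq2.
  destruct (Rle_lt_dec (snd x) 0) as [Hx2|Hx2]; [|destruct (Rle_lt_dec (snd y) 0) as [Hy2|Hy2]].
  - assert (Hy2 : 0 < snd y).
    { unfold bisector_dir in Hq2; simpl in Hq2. pose proof (Cmod_ge_0 x). pose proof (Cmod_ge_0 y). nra. }
    destruct (segment_meets_positive_axis x y Hx2 Hy2 Hq1 Hq2) as [w [Hw0 [Hw1 Hw]]].
    exists w. auto.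
  - rewrite <- bisector_dir_comm in Hq1, Hq2.
    destruct (segment_meets_positive_axis y x) as [w [Hw0 [Hw1 Hw]]]; auto.
    exists w. repeat split; auto. left. rewrite cdist_sym, (cdist_sym w y), (cdist_sym x y). lra.
  - assert (Ex : lin 0 1 x = snd x) by (unfold lin; ring).
    assert (Ey : lin 0 1 y = snd y) by (unfold lin; ring).
    exists (crossing 0 1 x y). repeat split.
    + assert (K : lin 0 1 (crossing 0 1 x y) = 0)
        by (apply lin_crossing; [apply unit_side0 | rewrite Ex, Ey; lra]).
      unfold lin in K. lra.
    + unfold crossing, seg, reflect. simpl. rewrite ?Ex, ?Ey.
      replace (fst y - 2 * snd y * 0 + snd y / (snd x + snd y) * (fst x - (fst y - 2 * snd y * 0)))
        with ((fst x * snd y + fst y * snd x) / (snd x + snd y)) by (field; lra).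
      apply Rdiv_le_0_compat; [apply upper_pair_cross_nonneg; auto | lra].
    + right. repeat split; auto. rewrite <- Ex, <- Ey. apply crossing_path_eq; auto using unit_side0; lra.
Qed.

Definition bisector_reflect (th : R) (v : C) : C :=
  (cos th * fst v + sin th * snd v, sin th * fst v - cos th * snd v).

Section BisectorReflection.

Variable th : R.

Let sin_cos_th : sin th ^ 2 + cos th ^ 2 = 1.
Proof. apply sin_cos_pow2. Qed.

Lemma bisector_reflect_invol v : bisector_reflect th (bisector_reflect th v) = v.
Proof.
  pose proof sin_cos_th. destruct v as [v1 v2]. unfold bisector_reflect; simpl.
  f_equal; [transitivity (v1 * (sin th ^ 2 + cos th ^ 2))|transitivity (v2 * (sin th ^ 2 + cos th ^ 2))];
    try ring; rewrite H; ring.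
Qed.

Lemma cdist_bisector_reflect a b : cdist (bisector_reflect th a) (bisector_reflect th b) = cdist a b.
Proof.
  pose proof sin_cos_th. rewrite !cdist_sqrt. f_equal. unfold bisector_reflect; simpl.
  transitivity (((fst a - fst b) ^ 2 + (snd a - snd b) ^ 2) * (sin th ^ 2 + cos th ^ 2)); [ring|].
  rewrite H. ring.
Qed.

Lemma Cmod_bisector_reflect v : Cmod (bisector_reflect th v) = Cmod v.
Proof.
  rewrite <- !cdist_0_r, <- (cdist_bisector_reflect v (0, 0)). f_equal.
  unfold bisector_reflect; simpl. f_equal; ring.
Qed.

Lemma side0_bisector_reflect v : side0 (bisector_reflect th v) = side1 th v.
Proof. unfold side0, side1, bisector_reflect; simpl. ring. Qed.

Lemma side1_bisector_reflect v : side1 th (bisector_reflect th v) = side0 v.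
Proof.
  pose proof sin_cos_th. unfold side0, side1, bisector_reflect; simpl.
  transitivity (snd v * (sin th ^ 2 + cos th ^ 2)); [ring|]. rewrite H. ring.
Qed.

Lemma bisector_dir_reflect x y :
  bisector_dir (bisector_reflect th x) (bisector_reflect th y) = bisector_reflect th (bisector_dir x y).
Proof.
  unfold bisector_dir. rewrite !Cmod_bisector_reflect.
  unfold bisector_reflect; simpl. f_equal; ring.
Qed.

End BisectorReflection.

Section ReflexUpperBound.

Variable th : R.
Hypothesis Hth : PI < th < 2 * PI.

Let sin_th_neg : sin th < 0.
Proof. apply sin_lt_0; lra. Qed.

Let boundary_ex : exists z, boundary (sector th) z.
Proof. apply sector_boundary_ex. lra. Qed.

Lemma reflex_dot_le_dG q x : fst q <= 0 -> along1 th q <= 0 -> 0 < Cmod q ->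
  fst q * fst x + snd q * snd x <= Cmod q * dG (sector th) x.
Proof.
  intros Hq0 Hq1 Hq. pose proof sin_th_neg.
  enough ((fst q * fst x + snd q * snd x) / Cmod q <= dG (sector th) x)
    by (apply Rmult_le_reg_r with (/ Cmod q); [apply Rinv_0_lt_compat; lra|];
        replace (Cmod q * dG (sector th) x * / Cmod q) with (dG (sector th) x) by (field; lra); exact H0).
  apply dG_glb; auto. intros z Hz. destruct (reflex_boundary_sides th Hth z Hz) as [Hz0 Hz1].
  assert (Hqz : fst q * fst z + snd q * snd z <= 0).
  { assert (E : sin th * (fst q * fst z + snd q * snd z) = along1 th q * side0 z + fst q * side1 th z)
      by (unfold along1, side0, side1; ring).
    assert (0 <= along1 th q * side0 z) by nra. assert (0 <= fst q * side1 th z) by nra. nra. }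
  pose proof (dot_le_Cmod q (fst x - fst z) (snd x - snd z)). rewrite <- cdist_sqrt in H0.
  apply Rmult_le_reg_r with (Cmod q); auto. unfold Rdiv. rewrite Rmult_assoc, Rinv_l by lra. nra.
Qed.

Section TwoPoints.

Variables x y : C.
Hypotheses (Hx : sector th x) (Hy : sector th y).

Let q := bisector_dir x y.
Let pG_den := sqrt (cdist x y ^ 2 + 4 * dG (sector th) x * dG (sector th) y).

Let cdist_le_pG_den : cdist x y <= pG_den.
Proof.
  pose proof (reflex_dG_pos th Hth x Hx). pose proof (reflex_dG_pos th Hth y Hy).
  pose proof (cdist_ge0 x y). apply le_sqrt_of_pow2_le; nra.
Qed.

Let Cmod_pos v : sector th v -> 0 < Cmod v.
Proof. intros Hv. apply Cmod_gt_0. intros ->. exact (not_sector_origin th Hv). Qed.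

Lemma reflex_sG_den_le_segment : side0 q <= 0 -> side1 th q <= 0 -> sG_den (sector th) x y <= pG_den.
Proof.
  intros Hq0 Hq1. pose proof cdist_le_pG_den. pose proof (Cmod_pos x Hx). pose proof (Cmod_pos y Hy).
  set (l := Cmod x / (Cmod x + Cmod y)).
  assert (Hl : 0 <= l <= 1).
  { unfold l. split; [apply Rdiv_le_0_compat; lra|].
    apply Rmult_le_reg_r with (Cmod x + Cmod y); [lra|]. unfold Rdiv. rewrite Rmult_assoc, Rinv_l; lra. }
  assert (E0 : side0 (seg x y l) = side0 q / (Cmod x + Cmod y))
    by (unfold side0, seg, q, bisector_dir, l; simpl; field; lra).
  assert (E1 : side1 th (seg x y l) = side1 th q / (Cmod x + Cmod y))
    by (unfold side1, seg, q, bisector_dir, l; simpl; field; lra).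
  eapply Rle_trans; [apply (sG_den_le_compl _ x y (seg x y l)); auto|].
  - intros Hs. apply sector_iff_reflex in Hs; auto. rewrite E0, E1 in Hs.
    assert (0 < / (Cmod x + Cmod y)) by (apply Rinv_0_lt_compat; lra).
    unfold Rdiv in Hs. destruct Hs; nra.
  - rewrite cdist_seg_split; auto.
Qed.

Lemma reflex_sG_den_le_origin : fst q <= 0 -> along1 th q <= 0 -> 0 < Cmod q ->
  sG_den (sector th) x y <= pG_den.
Proof.
  intros Hq0 Hq1 Hq.
  pose proof (reflex_dot_le_dG q x Hq0 Hq1 Hq) as Gx. pose proof (reflex_dot_le_dG q y Hq0 Hq1 Hq) as Gy.
  pose proof (reflex_dG_pos th Hth x Hx). pose proof (reflex_dG_pos th Hth y Hy).
  pose proof (Cmod_pos x Hx) as Hnx. pose proof (Cmod_pos y Hy) as Hny.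
  eapply Rle_trans; [apply (sG_den_le_compl _ x y (0, 0)); auto using not_sector_origin|].
  rewrite cdist_0_r, cdist_0_l. apply le_sqrt_of_pow2_le; [lra|].
  destruct (bisector_dir_dots x y) as (Eq & Eqx & Eqy). fold q in Eq, Eqx, Eqy.
  set (P := Cmod x * Cmod y + (fst x * fst y + snd x * snd y)) in *.
  assert (HP : 0 <= P) by (pose proof (Cmod_mult_ge_dot x y); unfold P; lra).
  rewrite Eqx in Gx. rewrite Eqy in Gy.
  assert (Hprod : Cmod x * Cmod y * P * P <= 2 * Cmod x * Cmod y * P * (dG (sector th) x * dG (sector th) y)).
  { rewrite <- Eq. apply Rle_trans with ((Cmod x * P) * (Cmod y * P)); [nra|].
    replace (Cmod q * Cmod q * (dG (sector th) x * dG (sector th) y))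
      with ((Cmod q * dG (sector th) x) * (Cmod q * dG (sector th) y)) by ring.
    apply Rmult_le_compat; nra. }
  assert (P <= 2 * (dG (sector th) x * dG (sector th) y)).
  { destruct (Req_dec P 0) as [E|E]; [nra|].
    apply Rmult_le_reg_l with (Cmod x * Cmod y * P); [apply Rmult_lt_0_compat; nra|]. nra. }
  rewrite cdist_pow2. pose proof (Cmod_mult_self x). pose proof (Cmod_mult_self y). unfold P in *. nra.
Qed.

Let pG_den_ge a b : 0 < a <= dG (sector th) x -> 0 < b <= dG (sector th) y ->
  sqrt (cdist x y ^ 2 + 4 * a * b) <= pG_den.
Proof. intros Ha Hb. apply sqrt_le_1_alt. nra. Qed.

Lemma reflex_sG_den_le_side0 : 0 < fst q -> 0 < side0 q -> sG_den (sector th) x y <= pG_den.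
Proof.
  intros Hq0 Hq1. pose proof sin_th_neg. pose proof cdist_le_pG_den.
  destruct (positive_axis_path x y Hq0 Hq1) as [w [Hw0 [Hw1 Hpath]]].
  eapply Rle_trans; [apply (sG_den_le_compl _ x y w); auto|].
  - intros Hs. apply sector_iff_reflex in Hs; auto. unfold side0, side1 in Hs. rewrite Hw0 in Hs.
    assert (0 <= fst w * - sin th) by (apply Rmult_le_pos; lra). lra.
  - destruct Hpath as [-> | [Hx0 [Hy0 ->]]]; [lra|].
    pose proof (reflex_side0_le_dG th Hth x). pose proof (reflex_side0_le_dG th Hth y).
    apply pG_den_ge; unfold side0 in *; lra.
Qed.

Lemma reflex_sG_den_le_side1 : 0 < along1 th q -> 0 < side1 th q -> sG_den (sector th) x y <= pG_den.
Proof.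
  intros Hq0 Hq1. pose proof sin_th_neg. pose proof cdist_le_pG_den.
  pose proof (bisector_dir_reflect th x y) as Eq. fold q in Eq.
  assert (Hr0 : 0 < fst (bisector_dir (bisector_reflect th x) (bisector_reflect th y)))
    by (rewrite Eq; unfold along1 in Hq0; unfold bisector_reflect; cbn [fst]; lra).
  assert (Hr1 : 0 < snd (bisector_dir (bisector_reflect th x) (bisector_reflect th y)))
    by (rewrite Eq; unfold side1 in Hq1; unfold bisector_reflect; cbn [snd]; lra).
  destruct (positive_axis_path _ _ Hr0 Hr1) as [w [Hw0 [Hw1 Hpath]]].
  assert (Ex : cdist x (bisector_reflect th w) = cdist (bisector_reflect th x) w)
    by (rewrite <- (cdist_bisector_reflect th _ w), bisector_reflect_invol; reflexivity).
  assert (Ey : cdist (bisector_reflect th w) y = cdist w (bisector_reflect th y))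
    by (rewrite <- (cdist_bisector_reflect th w), bisector_reflect_invol; reflexivity).
  eapply Rle_trans; [apply (sG_den_le_compl _ x y (bisector_reflect th w)); auto|].
  - intros Hs. apply sector_iff_reflex in Hs; auto.
    rewrite side0_bisector_reflect, side1_bisector_reflect in Hs.
    unfold side0, side1 in Hs. rewrite Hw0 in Hs.
    assert (0 <= fst w * - sin th) by (apply Rmult_le_pos; lra). lra.
  - rewrite Ex, Ey. destruct Hpath as [-> | [Hx0 [Hy0 ->]]]; rewrite cdist_bisector_reflect; [lra|].
    change (snd (bisector_reflect th x)) with (side0 (bisector_reflect th x)) in *.
    change (snd (bisector_reflect th y)) with (side0 (bisector_reflect th y)) in *.
    rewrite !side0_bisector_reflect in *.
    pose proof (reflex_side1_le_dG th Hth x). pose proof (reflex_side1_le_dG th Hth y).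
    apply pG_den_ge; lra.
Qed.

(* Route the path through [x, y] if it meets the complement of the sector, else
   through the origin if q lies in the polar cone of that complement, else
   through one of the two sides. *)
Lemma reflex_sG_den_le : sG_den (sector th) x y <= pG_den.
Proof.
  destruct (classic (side0 q <= 0 /\ side1 th q <= 0)) as [[Hq0 Hq1]|HK].
  { apply reflex_sG_den_le_segment; auto. }
  assert (Hq : 0 < side0 q \/ 0 < side1 th q) by (apply Classical_Prop.not_and_or in HK; lra).
  destruct (classic (fst q <= 0 /\ along1 th q <= 0)) as [[Hq0 Hq1]|Hcone].
  - apply reflex_sG_den_le_origin; auto.
    apply Cmod_gt_0. intros E. rewrite E in Hq. unfold side0, side1 in Hq; simpl in Hq. lra.
  - destruct (reflex_side_cases th Hth q Hq Hcone) as [[Hq0 Hq1]|[Hq0 Hq1]].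
    + apply reflex_sG_den_le_side0; auto.
    + apply reflex_sG_den_le_side1; auto.
Qed.

End TwoPoints.

Lemma reflex_pG_le_sG x y : sector th x -> sector th y -> pG (sector th) x y <= sG (sector th) x y.
Proof.
  intros Hx Hy. rewrite <- (Rmult_1_l (sG _ x y)).
  apply pG_le_sG_scaled; auto using reflex_dG_pos; try lra.
  rewrite Rmult_1_l. apply reflex_sG_den_le; auto.
Qed.

End ReflexUpperBound.

(** * Extremal configurations *)

Lemma sharp_lower_of_witness (G : C -> Prop) L A B :
  (exists x y, G x /\ G y /\ 0 < A x y /\ B x y <= L * A x y) -> sharp_lower G L A B.
Proof. intros [x [y [Gx [Gy [HA HB]]]]] c Hc. exists x, y. repeat split; auto. nra. Qed.

Lemma sharp_upper_of_witness (G : C -> Prop) U A B :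
  (exists x y, G x /\ G y /\ 0 < A x y /\ U * A x y <= B x y) -> sharp_upper G U A B.
Proof. intros [x [y [Gx [Gy [HA HB]]]]] c Hc. exists x, y. repeat split; auto. nra. Qed.

Lemma sharp_lower_one (G : C -> Prop) A B : (forall x y, G x -> G y -> B x y <= 1) ->
  (forall c, 1 < c -> exists x y, G x /\ G y /\ 1 < c * A x y) -> sharp_lower G 1 A B.
Proof.
  intros HB HA c Hc. destruct (HA c Hc) as [x [y [Gx [Gy H]]]].
  exists x, y. repeat split; auto. pose proof (HB x y Gx Gy). lra.
Qed.

Lemma pG_jstar_of_half_dists (G : C -> Prop) x y : 0 < cdist x y ->
  dG G x = cdist x y / 2 -> dG G y = cdist x y / 2 -> pG G x y = / sqrt 2 /\ jstar G x y = / 2.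
Proof.
  intros Ht Hx Hy. unfold pG, jstar. fold (cdist x y). rewrite Hx, Hy, Rmin_left by lra.
  split; [|field; lra].
  replace (cdist x y ^ 2 + 4 * (cdist x y / 2) * (cdist x y / 2)) with (cdist x y ^ 2 * 2) by field.
  rewrite sqrt_mult, sqrt_pow2 by (lra || nra). pose proof sqrt2_pos. field. lra.
Qed.

Lemma sector_dG_pos th x : 0 < th < 2 * PI -> sector th x -> 0 < dG (sector th) x.
Proof.
  intros Hth Hx. destruct (Rle_lt_dec th PI).
  - apply convex_dG_pos; auto. lra.
  - apply (reflex_dG_pos th); auto. lra.
Qed.

Lemma sin_triple a : sin (3 * a) = sin a * (4 * cos a ^ 2 - 1).
Proof. replace (3 * a) with (2 * a + a) by ring. rewrite sin_plus, sin_2a, cos_2a_cos. ring. Qed.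

Section SectorExtremalPoints.

Variable th : R.
Hypothesis Hth : 0 < th < 2 * PI.

Lemma sector_far_points c : 1 < c ->
  exists x y, sector th x /\ sector th y /\ 1 < c * jstar (sector th) x y.
Proof.
  intros Hc. set (T := 2 / (c - 1) + 1).
  assert (HT : 0 < T) by (unfold T; assert (0 < 2 / (c - 1)) by (apply Rdiv_lt_0_compat; lra); lra).
  set (x := polar 1 (th / 2)). set (y := polar (T + 1) (th / 2)).
  assert (Hx : sector th x) by (apply sector_polar; lra).
  assert (Hy : sector th y) by (apply sector_polar; lra).
  exists x, y. repeat split; auto.
  assert (Et : cdist x y = T) by (unfold x, y; rewrite cdist_polar_ray, Rabs_left1; lra).
  assert (Hdx : dG (sector th) x <= 1).
  { rewrite <- (Cmod_polar 1 (th / 2)), <- cdist_0_r by lra.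
    apply dG_le_compl; auto using not_sector_origin. }
  assert (Hpos : 0 < Rmin (dG (sector th) x) (dG (sector th) y))
    by (apply Rmin_pos; apply sector_dG_pos; auto).
  pose proof (Rmin_l (dG (sector th) x) (dG (sector th) y)).
  unfold jstar. fold (cdist x y). rewrite Et.
  apply Rlt_le_trans with (c * (T / (T + 2))).
  - apply Rmult_lt_reg_r with (T + 2); [lra|].
    replace (c * (T / (T + 2)) * (T + 2)) with (c * T) by (field; lra).
    assert ((c - 1) * T = 2 + (c - 1)) by (unfold T; field; lra). nra.
  - apply Rmult_le_compat_l; [lra|]. rewrite <- (Rmult_1_l (T / (T + 2))).
    apply scaled_ratio_le; lra.
Qed.

Let a := th / 4.
Let X0 := polar 1 a.
Let Y0 := polar 1 (3 * a).

Let sin_a_pos : 0 < sin a.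
Proof. apply sin_gt_0; unfold a; lra. Qed.

Let cos_a_pos : 0 < cos a.
Proof. apply cos_gt_0; unfold a; lra. Qed.

Let sides : side0 X0 = sin a /\ side1 th X0 = sin (3 * a) /\ side0 Y0 = sin (3 * a) /\ side1 th Y0 = sin a.
Proof.
  unfold X0, Y0, polar. rewrite !side1_polar. unfold side0; simpl.
  replace (th - a) with (3 * a) by (unfold a; field). replace (th - 3 * a) with a by (unfold a; field).
  repeat split; ring.
Qed.

Lemma symmetric_points_sector : sector th X0 /\ sector th Y0.
Proof. split; apply sector_polar; unfold a; lra. Qed.

Lemma symmetric_points_cdist : cdist X0 Y0 = 2 * sin a.
Proof.
  rewrite cdist_sqrt. unfold X0, Y0, polar; cbn [fst snd]. apply sqrt_eq_of_pow2; [lra|].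
  pose proof (sin_cos_pow2 a). pose proof (sin_cos_pow2 (3 * a)).
  pose proof (cos_minus (3 * a) a) as E. replace (3 * a - a) with (2 * a) in E by ring.
  pose proof (cos_2a_sin a). nra.
Qed.

Lemma symmetric_points_dG : dG (sector th) X0 = sin a /\ dG (sector th) Y0 = sin a.
Proof.
  destruct sides as (Hx0 & Hx1 & Hy0 & Hy1). destruct symmetric_points_sector as [Hx Hy].
  destruct (Rle_lt_dec th PI) as [Hle|Hgt].
  - assert (sin a <= sin (3 * a)).
    { rewrite sin_triple. assert (0 <= cos (2 * a)) by (apply cos_ge_0; unfold a; lra).
      rewrite cos_2a_cos in H. nra. }
    rewrite !convex_dG_eq by (auto; lra). rewrite Hx0, Hx1, Hy0, Hy1, Rmin_left, Rmin_right; auto.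
  - assert (Hth' : PI < th < 2 * PI) by lra. pose proof (sin_lt_0 th Hgt (proj2 Hth)).
    split; apply Rle_antisym.
    + assert (Hz1 : side1 th (fst X0, 0) <= 0)
        by (unfold side1, X0, polar; simpl; nra).
      eapply Rle_trans; [apply (reflex_dG_le_side0_gap th Hth' X0 (fst X0, 0)); auto; simpl; lra|].
      unfold side0; simpl. rewrite Rminus_0_r, Rmult_1_l, Rabs_right; lra.
    + rewrite <- Hx0. apply reflex_side0_le_dG; auto.
    + assert (Hz1 : side1 th (polar (cos a) th) = 0)
        by (unfold polar; rewrite side1_polar, Rminus_diag, sin_0; ring).
      assert (Hz0 : side0 (polar (cos a) th) <= 0) by (unfold polar, side0; simpl; nra).
      assert (Hz : along1 th Y0 - along1 th (polar (cos a) th) = 0).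
      { unfold Y0. rewrite !along1_polar, Rminus_diag, cos_0.
        replace (th - 3 * a) with a by (unfold a; field). ring. }
      eapply Rle_trans; [apply (reflex_dG_le_side1_gap th Hth' Y0 (polar (cos a) th)); auto; lra|].
      rewrite Hz1, Hy1, Rminus_0_r, Rabs_right; lra.
    + rewrite <- Hy1. apply reflex_side1_le_dG; auto.
Qed.

Lemma symmetric_points_pG_jstar : pG (sector th) X0 Y0 = / sqrt 2 /\ jstar (sector th) X0 Y0 = / 2.
Proof.
  destruct symmetric_points_dG as [Hx Hy].
  apply pG_jstar_of_half_dists; rewrite symmetric_points_cdist; lra.
Qed.

Lemma symmetric_points_sG_convex : th <= PI -> sG (sector th) X0 Y0 <= / (2 * cos a).
Proof.
  intros Hle. destruct symmetric_points_sector as [Hx Hy]. destruct sides as (Hx0 & Hx1 & Hy0 & Hy1).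
  pose proof (convex_sG_den_ge th (conj (proj1 Hth) Hle) X0 Y0 Hx Hy) as K.
  rewrite Hx0, Hx1, Hy0, Hy1, symmetric_points_cdist, Rmin_left in K by (apply Req_le; f_equal; ring).
  replace ((2 * sin a) ^ 2 + 4 * sin a * sin (3 * a)) with ((4 * sin a * cos a) ^ 2) in K
    by (rewrite sin_triple; ring).
  rewrite sqrt_pow2 in K by nra.
  rewrite sG_eq, symmetric_points_cdist.
  apply Rmult_le_reg_r with (sG_den (sector th) X0 Y0); [nra|].
  unfold Rdiv. rewrite Rmult_assoc, Rinv_l by nra.
  apply Rle_trans with (/ (2 * cos a) * (4 * sin a * cos a)).
  - replace (/ (2 * cos a) * (4 * sin a * cos a)) with (2 * sin a) by (field; lra). lra.
  - apply Rmult_le_compat_l; [apply Rlt_le, Rinv_0_lt_compat; lra | exact K].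
Qed.

Lemma symmetric_points_sG_reflex : PI < th -> sin a <= sG (sector th) X0 Y0.
Proof.
  intros Hgt. destruct symmetric_points_sector as [Hx Hy]. destruct symmetric_points_dG as [Hdx Hdy].
  assert (HD : sG_den (sector th) X0 Y0 <= 2).
  { eapply Rle_trans; [apply (sG_den_le_compl _ X0 Y0 (0, 0)); auto using not_sector_origin|].
    rewrite cdist_0_r, cdist_0_l. unfold X0, Y0. rewrite !Cmod_polar by lra. lra. }
  pose proof (sG_den_ge_dG_sum _ (sector_boundary_ex th (proj1 Hth)) X0 Y0). rewrite Hdx, Hdy in H.
  rewrite sG_eq, symmetric_points_cdist.
  apply Rmult_le_reg_r with (sG_den (sector th) X0 Y0); [lra|].
  unfold Rdiv. rewrite Rmult_assoc, Rinv_l by lra. nra.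
Qed.

End SectorExtremalPoints.

Section ConvexHorizontalPoints.

Variable th : R.
Hypothesis Hth : 0 < th <= PI.

(* [h] is small enough that the real axis is the side nearest to both points. *)
Let h := sin (th / 2) / 2.
Let X := (1, h).
Let Y := (1 + 2 * h, h).

Let h_pos : 0 < h.
Proof. unfold h. assert (0 < sin (th / 2)) by (apply sin_gt_0; lra). lra. Qed.

Let side1_ge : h <= side1 th X /\ side1 th X <= side1 th Y.
Proof.
  assert (0 < sin (th / 2)) by (apply sin_gt_0; lra).
  assert (0 <= cos (th / 2) <= 1) by (split; [apply cos_ge_0; lra | apply COS_bound]).
  assert (Esin : sin th = 2 * sin (th / 2) * cos (th / 2)) by (rewrite <- sin_2a; f_equal; field).
  pose proof (cos_double_half th) as Ecos. pose proof (sin_ge_0 th ltac:(lra) ltac:(lra)).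
  unfold side1, X, Y, h; simpl. rewrite Esin, Ecos. split; nra.
Qed.

Let sector_XY : sector th X /\ sector th Y.
Proof. destruct side1_ge. split; apply sector_of_sides_convex; unfold side0; simpl; auto; lra. Qed.

Let dG_XY : dG (sector th) X = h /\ dG (sector th) Y = h.
Proof.
  destruct side1_ge, sector_XY.
  rewrite !convex_dG_eq by auto. unfold side0; simpl. split; apply Rmin_left; lra.
Qed.

Let cdist_XY : cdist X Y = 2 * h.
Proof. rewrite cdist_sqrt. unfold X, Y; simpl. apply sqrt_eq_of_pow2; [lra | ring]. Qed.

Lemma horizontal_points : exists x y, sector th x /\ sector th y /\
  pG (sector th) x y = / sqrt 2 /\ jstar (sector th) x y = / 2 /\ pG (sector th) x y <= sG (sector th) x y.
Proof.
  destruct sector_XY as [Hx Hy]. destruct dG_XY as [Hdx Hdy].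
  exists X, Y. repeat split; auto.
  1-2: apply pG_jstar_of_half_dists; rewrite cdist_XY; lra.
  rewrite <- (Rmult_1_l (sG _ X Y)). apply pG_le_sG_scaled; auto using convex_dG_pos; try lra.
  - apply sector_boundary_ex; lra.
  - rewrite Rmult_1_l. eapply Rle_trans; [apply convex_sG_den_le; auto|]. apply sqrt_le_1_alt.
    rewrite Hdx, Hdy. unfold side0 at 1 2; simpl.
    pose proof (Rmin_l (h * h) (side1 th X * side1 th Y)). lra.
Qed.

End ConvexHorizontalPoints.

Section Sector.

Variable th : R.
Hypothesis Hth : 0 < th < 2 * PI.

Let boundary_ex : exists z, boundary (sector th) z.
Proof. apply sector_boundary_ex. lra. Qed.

Lemma sector_jstar_pG x y : sector th x -> sector th y ->
  jstar (sector th) x y <= pG (sector th) x y /\ pG (sector th) x y <= sqrt 2 * jstar (sector th) x y.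
Proof. intros Hx Hy. apply jstar_le_pG_le_sqrt2_jstar; auto using sector_dG_pos. Qed.

Lemma sector_inequalities_convex x y : th <= PI -> sector th x -> sector th y ->
  (jstar (sector th) x y <= sG (sector th) x y /\ sG (sector th) x y <= sqrt 2 * jstar (sector th) x y) /\
  (/ (sqrt 2 * cos (th / 4)) * pG (sector th) x y <= sG (sector th) x y /\
   sG (sector th) x y <= pG (sector th) x y).
Proof.
  intros Hle Hx Hy. assert (Hth' : 0 < th <= PI) by lra.
  pose proof (convex_sG_le_pG th Hth' x y Hx Hy). pose proof (convex_pG_le_sG th Hth' x y Hx Hy).
  pose proof (sector_jstar_pG x y Hx Hy).
  assert (0 < sqrt 2 * cos (th / 4)) by (apply Rmult_lt_0_compat; [apply sqrt2_pos | apply cos_gt_0; lra]).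
  repeat split; try lra.
  - apply jstar_le_sG; auto using sector_dG_pos.
  - rewrite <- (Rmult_1_l (sG _ x y)), <- (Rinv_l (sqrt 2 * cos (th / 4))), Rmult_assoc by lra.
    apply Rmult_le_compat_l; [apply Rlt_le, Rinv_0_lt_compat|]; lra.
Qed.

Lemma sector_inequalities_reflex x y : PI < th -> sector th x -> sector th y ->
  (jstar (sector th) x y <= sG (sector th) x y /\
   sG (sector th) x y <= 2 * sin (th / 4) * jstar (sector th) x y) /\
  (pG (sector th) x y <= sG (sector th) x y /\
   sG (sector th) x y <= sqrt 2 * sin (th / 4) * pG (sector th) x y).
Proof.
  intros Hgt Hx Hy. assert (Hth' : PI < th < 2 * PI) by lra.
  pose proof (reflex_sG_le_pG th Hth' x y Hx Hy). pose proof (sector_jstar_pG x y Hx Hy).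
  assert (0 < sin (th / 4)) by (apply sin_gt_0; lra).
  repeat split; auto using jstar_le_sG, sector_dG_pos, reflex_pG_le_sG.
  eapply Rle_trans; [eassumption|].
  replace (2 * sin (th / 4) * jstar (sector th) x y)
    with (sqrt 2 * sin (th / 4) * (sqrt 2 * jstar (sector th) x y))
    by (rewrite <- Rmult_assoc, (Rmult_comm (sqrt 2 * sin (th / 4))), <- !Rmult_assoc, sqrt2_mult_self; ring).
  apply Rmult_le_compat_l; [pose proof sqrt2_pos; nra | tauto].
Qed.

Let far_points_pG c : 1 < c -> exists x y, sector th x /\ sector th y /\ 1 < c * pG (sector th) x y.
Proof.
  intros Hc. destruct (sector_far_points th Hth c Hc) as [x [y [Hx [Hy H]]]].
  exists x, y. repeat split; auto. pose proof (sector_jstar_pG x y Hx Hy). nra.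
Qed.

Let symmetric_witness : exists x y, sector th x /\ sector th y /\
  pG (sector th) x y = / sqrt 2 /\ jstar (sector th) x y = / 2 /\
  (th <= PI -> sG (sector th) x y <= / (2 * cos (th / 4))) /\
  (PI < th -> sin (th / 4) <= sG (sector th) x y).
Proof.
  destruct (symmetric_points_sector th Hth). destruct (symmetric_points_pG_jstar th Hth).
  exists (polar 1 (th / 4)), (polar 1 (3 * (th / 4))). repeat split; auto.
  - apply (symmetric_points_sG_convex th Hth).
  - apply (symmetric_points_sG_reflex th Hth).
Qed.

Lemma sector_sharp_jstar_pG :
  sharp_lower (sector th) 1 (jstar (sector th)) (pG (sector th)) /\
  sharp_upper (sector th) (sqrt 2) (jstar (sector th)) (pG (sector th)).
Proof.
  split.
  - apply sharp_lower_one; [intros; apply pG_le_1; auto using sector_dG_pos|].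
    apply sector_far_points, Hth.
  - apply sharp_upper_of_witness. destruct symmetric_witness as (x & y & Hx & Hy & Hp & Hj & _).
    exists x, y. rewrite Hp, Hj, inv_sqrt2. repeat split; auto; lra.
Qed.

Lemma sector_sharp_convex : th <= PI ->
  (sharp_lower (sector th) 1 (jstar (sector th)) (sG (sector th)) /\
   sharp_upper (sector th) (sqrt 2) (jstar (sector th)) (sG (sector th))) /\
  (sharp_lower (sector th) (/ (sqrt 2 * cos (th / 4))) (pG (sector th)) (sG (sector th)) /\
   sharp_upper (sector th) 1 (pG (sector th)) (sG (sector th))).
Proof.
  intros Hle. assert (Hth' : 0 < th <= PI) by lra.
  pose proof sqrt2_mult_self. pose proof sqrt2_pos.
  assert (0 < cos (th / 4)) by (apply cos_gt_0; lra).
  destruct (horizontal_points th Hth') as (x & y & Hx & Hy & Hp & Hj & Hs).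
  repeat split.
  - apply sharp_lower_one; [intros; apply sG_le_1; auto using sector_dG_pos|].
    apply sector_far_points, Hth.
  - apply sharp_upper_of_witness. exists x, y. rewrite Hj. rewrite Hp, inv_sqrt2 in Hs.
    repeat split; auto; lra.
  - apply sharp_lower_of_witness. destruct symmetric_witness as (x' & y' & Hx' & Hy' & Hp' & _ & Hs' & _).
    exists x', y'. rewrite Hp'. repeat split; auto; [apply Rinv_0_lt_compat; lra|].
    eapply Rle_trans; [exact (Hs' Hle)|]. apply Req_le. rewrite <- Rinv_mult. f_equal. nra.
  - apply sharp_upper_of_witness. exists x, y. repeat split; auto; [|lra].
    rewrite Hp. apply Rinv_0_lt_compat; lra.
Qed.

Lemma sector_sharp_reflex : PI < th ->
  (sharp_lower (sector th) 1 (jstar (sector th)) (sG (sector th)) /\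
   sharp_upper (sector th) (2 * sin (th / 4)) (jstar (sector th)) (sG (sector th))) /\
  (sharp_lower (sector th) 1 (pG (sector th)) (sG (sector th)) /\
   sharp_upper (sector th) (sqrt 2 * sin (th / 4)) (pG (sector th)) (sG (sector th))).
Proof.
  intros Hgt. pose proof sqrt2_mult_self. pose proof sqrt2_pos.
  destruct symmetric_witness as (x & y & Hx & Hy & Hp & Hj & _ & Hs).
  specialize (Hs Hgt).
  repeat split.
  - apply sharp_lower_one; [intros; apply sG_le_1; auto using sector_dG_pos|].
    apply sector_far_points, Hth.
  - apply sharp_upper_of_witness. exists x, y. rewrite Hj. repeat split; auto; [lra|].
    eapply Rle_trans; [|exact Hs]. apply Req_le. field.
  - apply sharp_lower_one; [intros; apply sG_le_1; auto using sector_dG_pos|]. exact far_points_pG.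
  - apply sharp_upper_of_witness. exists x, y. rewrite Hp. repeat split; auto; [apply Rinv_0_lt_compat; lra|].
    eapply Rle_trans; [|exact Hs]. apply Req_le. field. lra.
Qed.

End Sector.

Theorem theorem3p11 (theta : R) (htheta : 0 < theta < 2 * PI) :
  let S := sector theta in
  (* the inequalities *)
  (forall x y : C, S x -> S y ->
     (* (1) *)
     (jstar S x y <= pG S x y /\ pG S x y <= sqrt 2 * jstar S x y) /\
     (theta <= PI ->
        (* (2) *)
        (jstar S x y <= sG S x y /\ sG S x y <= sqrt 2 * jstar S x y) /\
        (* (4) *)
        (/ (sqrt 2 * cos (theta / 4)) * pG S x y <= sG S x y /\
         sG S x y <= pG S x y)) /\
     (PI < theta ->
        (* (3) *)
        (jstar S x y <= sG S x y /\
         sG S x y <= 2 * sin (theta / 4) * jstar S x y) /\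
        (* (5) *)
        (pG S x y <= sG S x y /\
         sG S x y <= sqrt 2 * sin (theta / 4) * pG S x y))) /\
  (* sharpness of the constants *)
  (sharp_lower S 1 (jstar S) (pG S) /\ sharp_upper S (sqrt 2) (jstar S) (pG S)) /\
  (theta <= PI ->
     (sharp_lower S 1 (jstar S) (sG S) /\
      sharp_upper S (sqrt 2) (jstar S) (sG S)) /\
     (sharp_lower S (/ (sqrt 2 * cos (theta / 4))) (pG S) (sG S) /\
      sharp_upper S 1 (pG S) (sG S))) /\
  (PI < theta ->
     (sharp_lower S 1 (jstar S) (sG S) /\
      sharp_upper S (2 * sin (theta / 4)) (jstar S) (sG S)) /\
     (sharp_lower S 1 (pG S) (sG S) /\
      sharp_upper S (sqrt 2 * sin (theta / 4)) (pG S) (sG S))).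
Proof.
  intros S. split; [|split; [|split]].
  - intros x y Hx Hy. split; [apply sector_jstar_pG; auto|split].
    + intros Hle. apply sector_inequalities_convex; auto.
    + intros Hgt. apply sector_inequalities_reflex; auto.
  - apply sector_sharp_jstar_pG; auto.
  - apply sector_sharp_convex; auto.
  - apply sector_sharp_reflex; auto.
Qed.
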